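(* Assume the setting below, with $\hat\Phi$ twice differentiable at $v=1$ and $\hat\Phi'(v)/(v^n-1)\in L^1(\delta,\infty)$ for every $\delta>1$. Then $$\lim_{A\to0^+}\chi(A)=P_{cr}:=\int_1^\infty\frac{\hat\Phi'(\tau)}{\tau^n-1}\,d\tau .$$
   Context: $n\ge2$; $\kappa$ is a continuous function on $[0,\infty)$ with $\int_0^{\delta_0}s\max\{\kappa(s),0\}ds\le1$ for some $\delta_0>1$; $f$ solves $f''+\kappa f=0$, $f(0)=0$, $f'(0)=1$; $\sigma(t)=\int_0^tf^{n-1}(s)ds$. $\Phi:(0,\infty)^n\to\mathbb R$ is symmetric and $C^1$, $\hat\Phi(v)=\Phi(v^{1-n},v,\dots,v)$. For $A>0$ small, $r_A(\rho)=\sigma^{-1}(\sigma(\rho)+\sigma(A))$, $\tau_A(\rho)=f(r_A(\rho))/f(\rho)$ and $$\chi(A)=\tau_A(1)^{n-1}\int_0^1\frac{f'(r_A(\rho))}{f(r_A(\rho))}\,\tau_A(\rho)^{2-n}\,\hat\Phi'(\tau_A(\rho))\,d\rho .$$ *)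

From Stdlib Require Import Reals Lra ClassicalEpsilon.
Open Scope R_scope.

(** Riemann integral as a total function: the Stdlib [RiemannInt] value when
    [g] is Riemann integrable on [a,b] (independent of the proof), else 0. *)
Definition RInt (g : R -> R) (a b : R) : R :=
  match excluded_middle_informative (inhabited (Riemann_integrable g a b)) with
  | left H => RiemannInt (epsilon H (fun _ => True))
  | right _ => 0
  end.

(** Vectors of (0,oo)^n are represented as [nat -> R]; only indices < n matter. *)
Definition pos_vec (n : nat) (x : nat -> R) : Prop :=
  forall i, (i < n)%nat -> 0 < x i.

Definition upd (x : nat -> R) (i : nat) (t : R) : nat -> R :=
  fun j => if Nat.eqb j i then t else x j.

Definition depends_on_first (n : nat) (Phi : (nat -> R) -> R) : Prop :=
  forall x y, (forall i, (i < n)%nat -> x i = y i) -> Phi x = Phi y.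

Definition symmetric_on_pos (n : nat) (Phi : (nat -> R) -> R) : Prop :=
  forall (p : nat -> nat) (x : nat -> R),
    (forall i, (i < n)%nat -> (p i < n)%nat) ->
    (forall i j, (i < n)%nat -> (j < n)%nat -> p i = p j -> i = j) ->
    pos_vec n x ->
    Phi (fun i => x (p i)) = Phi x.

Definition C1_on_pos (n : nat) (Phi : (nat -> R) -> R) : Prop :=
  exists D : nat -> (nat -> R) -> R,
    forall i x, (i < n)%nat -> pos_vec n x ->
      derivable_pt_lim (fun t => Phi (upd x i t)) (x i) (D i x) /\
      (forall eps, 0 < eps -> exists eta, 0 < eta /\
         forall y, pos_vec n y ->
           (forall j, (j < n)%nat -> Rabs (y j - x j) < eta) ->
           Rabs (D i y - D i x) < eps).

Definition continuous_nonneg (k : R -> R) : Prop :=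
  forall x, 0 <= x -> limit1_in k (fun y => 0 <= y) (k x) x.

Definition deriv_nonneg (g g' : R -> R) : Prop :=
  forall t, 0 <= t ->
    limit1_in (fun h => (g (t + h) - g t) / h)
              (fun h => h <> 0 /\ 0 <= t + h) (g' t) 0.

Definition Phihat (n : nat) (Phi : (nat -> R) -> R) (v : R) : R :=
  Phi (fun i => if Nat.eqb i 0 then / v ^ (n - 1) else v).

Definition sigmaf (n : nat) (f : R -> R) (t : R) : R :=
  RInt (fun s => f s ^ (n - 1)) 0 t.

(** r_A(rho) = sigma^{-1}(sigma(rho) + sigma(A)), sinv being the inverse of sigma. *)
Definition rA (n : nat) (f sinv : R -> R) (A rho : R) : R :=
  sinv (sigmaf n f rho + sigmaf n f A).

Definition tauA (n : nat) (f sinv : R -> R) (A rho : R) : R :=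
  f (rA n f sinv A rho) / f rho.

(** integrand of chi(A): f'(r)/f(r) * tau^{2-n} * hatPhi'(tau). *)
Definition chi_integrand (n : nat) (f f1 sinv dPhi : R -> R) (A rho : R) : R :=
  f1 (rA n f sinv A rho) / f (rA n f sinv A rho)
  * / (tauA n f sinv A rho) ^ (n - 2)
  * dPhi (tauA n f sinv A rho).

Definition improper_left (g : R -> R) (a b L : R) : Prop :=
  forall eps, 0 < eps -> exists eta, 0 < eta /\
    forall e, a < e < a + eta ->
      inhabited (Riemann_integrable g e b) /\ Rabs (RInt g e b - L) < eps.

Definition improper_1_inf (g : R -> R) (L : R) : Prop :=
  forall eps, 0 < eps -> exists eta, 0 < eta /\ exists M0,
    forall d M, 1 < d < 1 + eta -> M0 < M ->
      inhabited (Riemann_integrable g d M) /\ Rabs (RInt g d M - L) < eps.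

(* Write g(t) = Phihat'(t)/(t^n - 1).  The proof has four parts.
   1. A Sturm-type comparison (jacobi_positive): the smallness condition
      int_0^delta0 s kappa_+(s) ds <= 1 forces f > 0 on (0, delta0].  Hence sigma is strictly
      increasing there, and r_A = sigma^-1(sigma(rho) + sigma(A)) is well defined, continuous
      and differentiable with r_A' = f(rho)^(n-1) / f(r_A)^(n-1) (inverse function rule).
   2. Differentiating Phi along v |-> (v^(1-n), v, ..., v) (chain_rule) shows that Phihat' is
      continuous, and symmetry of Phi gives Phihat'(1) = 0 (dPhi_at_1).  With the second
      derivative at 1 and the L^1 hypothesis, g is bounded near 1 and P_cr exists
      (gfun_bounded_near_1, critical_integral).
   3. Near rho = 0 the integrand of chi equals -g(tau_A) tau_A' up to a relative error eta
      (chi_identity, pointwise_estimate).  A change of variables then compares int_e^c chi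
      with int_{tau_A(c)}^{tau_A(e)} g; since tau_A(rho) >= A/(3 rho), the improper integral
      of chi at 0 exists and is close to int_{tau_A(c)}^oo g (change_of_variable_estimate).
   4. On [c, 1], tau_A -> 1 uniformly as A -> 0 while Phihat'(1) = 0, so this part of the
      integral and tau_A(1)^(n-1) - 1 vanish in the limit (chi_away_from_0).
   The file follows this order: one-variable analysis tools, the positivity of f, the
   function r_A, the derivative of Phihat, the integrability of g, the substitution estimate,
   the estimates of chi near and away from 0, and their assembly (chi_exists, chi_converges)
   into the theorem. *)

From Pilot Require Import Defs.
From Stdlib Require Import Reals Lra Lia ClassicalEpsilon FunctionalExtensionality Classical.
From Coquelicot Require Import Coquelicot.
Open Scope R_scope.

Lemma monotone_limit_at_infinity (F : R -> R) (a B : R) :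
  (forall x y, a <= x -> x <= y -> F x <= F y) -> (forall x, a <= x -> F x <= B) ->
  exists L, forall eps, 0 < eps -> exists M, a <= M /\ forall x, M <= x -> Rabs (F x - L) < eps.
Proof.
  intros Hm Hb.
  set (E := fun v => exists x, a <= x /\ v = F x).
  assert (HE : bound E) by (exists B; intros v [x [Hx ->]]; auto).
  assert (HE2 : exists v, E v) by (exists (F a); exists a; split; [lra|auto]).
  destruct (completeness E HE HE2) as [L [HL1 HL2]].
  exists L; intros eps Heps.
  assert (Hn : ~ is_upper_bound E (L - eps)).
  { intro H; specialize (HL2 _ H); lra. }
  apply Classical_Pred_Type.not_all_ex_not in Hn as [v Hv].
  apply Classical_Prop.imply_to_and in Hv as [[x0 [Hx0 ->]] Hv].
  exists x0; split; auto; intros x Hx.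
  assert (F x <= L) by (apply HL1; exists x; split; lra).
  assert (F x0 <= F x) by (apply Hm; lra).
  apply Rabs_def1; lra.
Qed.

Lemma monotone_limit_at_0 (F : R -> R) (c B : R) : 0 < c ->
  (forall x y, 0 < x -> x <= y -> y <= c -> F y <= F x) -> (forall x, 0 < x -> x <= c -> F x <= B) ->
  exists L, forall eps, 0 < eps -> exists eta, 0 < eta /\ eta <= c /\
     forall x, 0 < x < eta -> Rabs (F x - L) < eps.
Proof.
  intros Hc Hm Hb.
  destruct (monotone_limit_at_infinity (fun y => F (c / y)) 1 B) as [L HL].
  - intros x y Hx Hxy. apply Hm.
    + apply Rdiv_lt_0_compat; lra.
    + apply Rmult_le_compat_l; [lra|]. apply Rinv_le_contravar; lra.
    + unfold Rdiv. rewrite <- (Rmult_1_r c) at 2. apply Rmult_le_compat_l; [lra|].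
      rewrite <- Rinv_1. apply Rinv_le_contravar; lra.
  - intros x Hx. apply Hb. apply Rdiv_lt_0_compat; lra.
    unfold Rdiv. rewrite <- (Rmult_1_r c) at 2. apply Rmult_le_compat_l; [lra|].
    rewrite <- Rinv_1. apply Rinv_le_contravar; lra.
  - exists L. intros eps Heps. destruct (HL eps Heps) as [M [HM HM2]].
    exists (c / M). split; [apply Rdiv_lt_0_compat; lra|]. split.
    { unfold Rdiv. rewrite <- (Rmult_1_r c) at 2. apply Rmult_le_compat_l; [lra|].
      rewrite <- Rinv_1. apply Rinv_le_contravar; lra. }
    intros x Hx. specialize (HM2 (c / x)).
    replace (c / (c / x)) with x in HM2 by (field; lra).
    apply HM2. apply Rmult_le_reg_r with x; [lra|].
    unfold Rdiv; rewrite Rmult_assoc, Rinv_l, Rmult_1_r by lra.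
    destruct Hx as [Hx1 Hx2].
    apply Rmult_lt_compat_l with (r := M) in Hx2; [|lra].
    unfold Rdiv in Hx2. rewrite <- Rmult_assoc, (Rmult_comm M c), Rmult_assoc, Rinv_r, Rmult_1_r in Hx2 by lra.
    lra.
Qed.

Lemma dominated_limit_at_infinity (u w : R -> R) (a B : R) :
  (forall x y, a <= x -> x <= y -> Rabs (u y - u x) <= w y - w x) ->
  (forall x, a <= x -> w x <= B) ->
  exists L, forall eps, 0 < eps -> exists M, a <= M /\ forall x, M <= x -> Rabs (u x - L) < eps.
Proof.
  intros Hd Hb.
  assert (Hw : forall x y, a <= x -> x <= y -> w x <= w y).
  { intros x y Hx Hy. specialize (Hd x y Hx Hy). pose proof (Rabs_pos (u y - u x)). lra. }
  destruct (monotone_limit_at_infinity w a B Hw Hb) as [Lw HLw].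
  destruct (monotone_limit_at_infinity (fun x => u x + w x) a (u a + 2 * B - w a)) as [L HL].
  - intros x y Hx Hy. specialize (Hd x y Hx Hy). pose proof (Rle_abs (- (u y - u x))).
    rewrite Rabs_Ropp in H. lra.
  - intros x Hx. specialize (Hd a x (Rle_refl a) Hx). specialize (Hb x Hx).
    pose proof (Rle_abs (u x - u a)). lra.
  - exists (L - Lw). intros eps Heps.
    destruct (HLw (eps/2)) as [M1 [HM1 HM1']]; [lra|].
    destruct (HL (eps/2)) as [M2 [HM2 HM2']]; [lra|].
    exists (Rmax M1 M2). split; [apply (Rle_trans _ M1); [auto|apply Rmax_l]|].
    intros x Hx. specialize (HM1' x (Rle_trans _ _ _ (Rmax_l _ _) Hx)).
    specialize (HM2' x (Rle_trans _ _ _ (Rmax_r _ _) Hx)).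
    apply Rabs_def2 in HM1'. apply Rabs_def2 in HM2'. apply Rabs_def1; lra.
Qed.

Lemma dominated_limit_at_0 (u w : R -> R) (c B : R) : 0 < c ->
  (forall x y, 0 < x -> x <= y -> y <= c -> Rabs (u x - u y) <= w x - w y) ->
  (forall x, 0 < x -> x <= c -> w x <= B) ->
  exists L, forall eps, 0 < eps -> exists eta, 0 < eta /\ eta <= c /\
     forall x, 0 < x < eta -> Rabs (u x - L) < eps.
Proof.
  intros Hc Hd Hb.
  assert (Hw : forall x y, 0 < x -> x <= y -> y <= c -> w y <= w x).
  { intros x y Hx Hy Hy2. specialize (Hd x y Hx Hy Hy2). pose proof (Rabs_pos (u x - u y)). lra. }
  destruct (monotone_limit_at_0 w c B Hc Hw Hb) as [Lw HLw].
  destruct (monotone_limit_at_0 (fun x => u x + w x) c (u c + 2 * B - w c)) as [L HL]; auto.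
  - intros x y Hx Hy Hy2. specialize (Hd x y Hx Hy Hy2). pose proof (Rle_abs (- (u x - u y))).
    rewrite Rabs_Ropp in H. lra.
  - intros x Hx Hx2. specialize (Hd x c Hx Hx2 (Rle_refl c)). specialize (Hb x Hx Hx2).
    pose proof (Rle_abs (u x - u c)). lra.
  - exists (L - Lw). intros eps Heps.
    destruct (HLw (eps/2)) as [M1 [HM1 [HM1c HM1']]]; [lra|].
    destruct (HL (eps/2)) as [M2 [HM2 [HM2c HM2']]]; [lra|].
    exists (Rmin M1 M2). split; [apply Rmin_pos; auto|]. split; [apply (Rle_trans _ M1); [apply Rmin_l|auto]|].
    intros x Hx. assert (x < M1) by (pose proof (Rmin_l M1 M2); lra).
    assert (x < M2) by (pose proof (Rmin_r M1 M2); lra).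
    specialize (HM1' x ltac:(lra)). specialize (HM2' x ltac:(lra)).
    apply Rabs_def2 in HM1'. apply Rabs_def2 in HM2'. apply Rabs_def1; lra.
Qed.

Lemma Defs_RInt_correct (g : R -> R) (a b : R) : ex_RInt g a b ->
  inhabited (Riemann_integrable g a b) /\ Defs.RInt g a b = RInt g a b.
Proof.
  intros H. pose proof (ex_RInt_Reals_0 _ _ _ H) as pr.
  split; [constructor; exact pr|].
  unfold Defs.RInt. destruct excluded_middle_informative as [Hi|Hi].
  - rewrite (RInt_Reals g a b (epsilon Hi (fun _ => True))). reflexivity.
  - exfalso; apply Hi; constructor; exact pr.
Qed.

Lemma improper_left_unique g a b L1 L2 :
  improper_left g a b L1 -> improper_left g a b L2 -> L1 = L2.
Proof.
  intros H1 H2. apply Rminus_diag_uniq. apply Rabs_eq_0.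
  apply Rle_antisym; [|apply Rabs_pos].
  apply Rnot_lt_le; intro Hp.
  destruct (H1 (Rabs (L1 - L2) / 2)) as [e1 [He1 H1']]; [lra|].
  destruct (H2 (Rabs (L1 - L2) / 2)) as [e2 [He2 H2']]; [lra|].
  set (e := a + Rmin e1 e2 / 2).
  assert (Hm := Rmin_pos e1 e2 He1 He2). pose proof (Rmin_l e1 e2). pose proof (Rmin_r e1 e2).
  destruct (H1' e) as [_ Ha]; [unfold e; lra|].
  destruct (H2' e) as [_ Hb]; [unfold e; lra|].
  pose proof (Rabs_triang (Defs.RInt g e b - L2) (- (Defs.RInt g e b - L1))) as HT.
  rewrite Rabs_Ropp in HT. replace (Defs.RInt g e b - L2 + - (Defs.RInt g e b - L1)) with (L1 - L2) in HT by ring.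
  lra.
Qed.

(** Calculus rules restated for real functions in beta-normal form, so that they apply
    directly to goals such as [is_derive (fun t => f t * g t) x _]. *)

Lemma der_mul f g x df dg : is_derive f x df -> is_derive g x dg ->
  is_derive (fun t => f t * g t) x (df * g x + f x * dg).
Proof. intros H1 H2. apply (is_derive_mult f g x df dg H1 H2). intros; apply Rmult_comm. Qed.

Lemma der_add f g x df dg : is_derive f x df -> is_derive g x dg ->
  is_derive (fun t => f t + g t) x (df + dg).
Proof. intros H1 H2. apply (is_derive_plus f g x df dg H1 H2). Qed.

Lemma der_sub f g x df dg : is_derive f x df -> is_derive g x dg ->
  is_derive (fun t => f t - g t) x (df - dg).
Proof. intros H1 H2. apply (is_derive_minus f g x df dg H1 H2). Qed.

Lemma der_id x : is_derive (fun t : R => t) x 1.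
Proof. apply (is_derive_id x). Qed.

Lemma der_const (c x : R) : is_derive (fun _ => c) x 0.
Proof. apply (is_derive_const c x). Qed.

Lemma der_eq_val (f : R -> R) (x l l' : R) : is_derive f x l -> l = l' -> is_derive f x l'.
Proof. intros H ->; exact H. Qed.

Lemma cont_of_der f x l : is_derive f x l -> continuity_pt f x.
Proof. intros H. apply continuity_pt_filterlim. apply (ex_derive_continuous f x). exists l; exact H. Qed.

Lemma continuous_of_pt f x : continuity_pt f x -> continuous f x.
Proof. intros H. apply continuity_pt_filterlim in H. exact H. Qed.

Lemma cont_mul f g x : continuity_pt f x -> continuity_pt g x -> continuity_pt (fun t => f t * g t) x.
Proof. intros; apply (continuity_pt_mult f g x); auto. Qed.

Lemma cont_add f g x : continuity_pt f x -> continuity_pt g x -> continuity_pt (fun t => f t + g t) x.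
Proof. intros; apply (continuity_pt_plus f g x); auto. Qed.

Lemma cont_sub f g x : continuity_pt f x -> continuity_pt g x -> continuity_pt (fun t => f t - g t) x.
Proof. intros; apply (continuity_pt_minus f g x); auto. Qed.

Lemma cont_const (c x : R) : continuity_pt (fun _ => c) x.
Proof. apply continuity_pt_const. intros a b; reflexivity. Qed.

Lemma cont_id x : continuity_pt (fun t => t) x.
Proof. apply continuity_pt_id. Qed.

Lemma cont_inv f x : continuity_pt f x -> f x <> 0 -> continuity_pt (fun t => / f t) x.
Proof. intros; apply (continuity_pt_inv f x); auto. Qed.

Lemma cont_div f g x : continuity_pt f x -> continuity_pt g x -> g x <> 0 -> continuity_pt (fun t => f t / g t) x.
Proof. intros; apply (continuity_pt_div f g x); auto. Qed.

Lemma cont_pow f x k : continuity_pt f x -> continuity_pt (fun t => f t ^ k) x.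
Proof. intros H; induction k; simpl. apply cont_const. apply cont_mul; auto. Qed.

Lemma cont_comp f g x : continuity_pt g x -> continuity_pt f (g x) -> continuity_pt (fun t => f (g t)) x.
Proof. intros; apply (continuity_pt_comp g f x); auto. Qed.

Lemma cont_abs f x : continuity_pt f x -> continuity_pt (fun t => Rabs (f t)) x.
Proof. intros; apply cont_comp; auto. apply Rcontinuity_abs. Qed.

Lemma cont_ext f g x : continuity_pt f x -> (forall t, f t = g t) -> continuity_pt g x.
Proof. intros H E. replace g with f; auto. apply functional_extensionality; auto. Qed.

Lemma cont_ext_loc f g x d : 0 < d -> continuity_pt f x -> (forall t, Rabs (t - x) < d -> f t = g t) -> continuity_pt g x.
Proof.
  intros Hd H E eps Heps. destruct (H eps Heps) as [a [Ha Ha']].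
  exists (Rmin a d); split; [apply Rmin_pos; auto|]. intros y [Hy1 Hy2]. simpl in *. unfold R_dist in *.
  pose proof (Rmin_l a d); pose proof (Rmin_r a d).
  rewrite <- !E; [apply Ha'; split; auto; lra|rewrite Rminus_diag, Rabs_R0; lra|lra].
Qed.

Lemma bounded_on_segment (g : R -> R) a b : a <= b -> (forall x, a <= x <= b -> continuity_pt g x) ->
  exists M, 0 <= M /\ forall x, a <= x <= b -> Rabs (g x) <= M.
Proof.
  intros Hab Hc. destruct (continuity_ab_maj (fun x => Rabs (g x)) a b Hab) as [Mx [HM1 HM2]].
  - intros c Hc'. apply (continuity_pt_comp g Rabs). auto. apply Rcontinuity_abs.
  - exists (Rabs (g Mx)); split; [apply Rabs_pos|auto].
Qed.

Lemma sign_persistence g x : continuity_pt g x -> 0 < g x -> exists d, 0 < d /\ forall y, Rabs (y - x) < d -> 0 < g y.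
Proof.
  intros H Hp. destruct (H (g x) Hp) as [a [Ha Ha']]. exists a; split; auto. intros y Hy.
  destruct (Req_dec y x) as [->|Hne]; auto.
  specialize (Ha' y). simpl in Ha'; unfold R_dist in Ha'.
  assert (Hq : Rabs (g y - g x) < g x) by (apply Ha'; split; [split; [exact I|intro; apply Hne; auto]|auto]).
  apply Rabs_def2 in Hq. lra.
Qed.

Lemma nondecreasing_by_mvt (F dF : R -> R) a b : a <= b ->
  (forall x, a < x < b -> is_derive F x (dF x)) ->
  (forall x, a <= x <= b -> continuity_pt F x) ->
  (forall x, a <= x <= b -> 0 <= dF x) -> F a <= F b.
Proof.
  intros Hab Hd Hc Hpos.
  destruct (MVT_gen F a b dF) as [c [Hc1 Hc2]].
  - intros x Hx. rewrite Rmin_left, Rmax_right in Hx by lra. apply Hd; lra.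
  - intros x Hx. rewrite Rmin_left, Rmax_right in Hx by lra. apply Hc; lra.
  - rewrite Rmin_left, Rmax_right in Hc1 by lra.
    assert (0 <= dF c * (b - a)) by (apply Rmult_le_pos; [apply Hpos|]; lra).
    lra.
Qed.

Lemma ex_RInt_between (h : R -> R) a b : (forall z, Rmin a b <= z <= Rmax a b -> continuity_pt h z) -> ex_RInt h a b.
Proof. intros H. apply (ex_RInt_continuous (V:=R_CompleteNormedModule)). intros; apply continuous_of_pt; auto. Qed.

Lemma ex_RInt_segment (h : R -> R) a b : a <= b -> (forall x, a <= x <= b -> continuity_pt h x) -> ex_RInt h a b.
Proof. intros Hab H. apply (ex_RInt_continuous (V:=R_CompleteNormedModule)). intros z Hz. rewrite Rmin_left, Rmax_right in Hz by lra.
  apply continuous_of_pt; auto. Qed.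

Lemma ex_RInt_cont (h : R -> R) a b : (forall x, continuity_pt h x) -> ex_RInt h a b.
Proof. intros H. apply (ex_RInt_continuous (V:=R_CompleteNormedModule)). intros; apply continuous_of_pt; auto. Qed.

Lemma derive_primitive (h : R -> R) a : (forall x, continuity_pt h x) ->
  forall x, is_derive (fun y => RInt h a y) x (h x).
Proof.
  intros H x. apply is_derive_RInt with (a := a).
  - exists (mkposreal 1 Rlt_0_1). intros y _. apply RInt_correct. apply ex_RInt_cont; auto.
  - apply continuous_of_pt; auto.
Qed.

Lemma ftc (F dF : R -> R) a b : a <= b -> (forall x, a <= x <= b -> is_derive F x (dF x)) ->
  (forall x, a <= x <= b -> continuity_pt dF x) -> ex_RInt dF a b /\ RInt dF a b = F b - F a.
Proof.
  intros Hab Hd Hc.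
  assert (H : is_RInt dF a b (minus (F b) (F a))).
  { apply (is_RInt_derive (V:=R_CompleteNormedModule)).
    intros x Hx; rewrite Rmin_left, Rmax_right in Hx by lra; auto.
    intros x Hx; rewrite Rmin_left, Rmax_right in Hx by lra; apply continuous_of_pt; auto. }
  split. exists (minus (F b) (F a)); auto. rewrite (is_RInt_unique (V:=R_CompleteNormedModule) dF a b _ H). reflexivity.
Qed.

(* Linearity and Chasles relation, with R's own operations instead of [scal]/[plus]. *)
Lemma RInt_scal_R (h : R -> R) a b l : ex_RInt h a b -> RInt (fun x => l * h x) a b = l * RInt h a b.
Proof. intros H. apply (RInt_scal h a b l H). Qed.

Lemma RInt_plus_R (f g : R -> R) a b : ex_RInt f a b -> ex_RInt g a b ->
  RInt (fun x => f x + g x) a b = RInt f a b + RInt g a b.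
Proof. intros; apply (RInt_plus f g a b); auto. Qed.

Lemma RInt_Chasles_R (h : R -> R) a b c : ex_RInt h a b -> ex_RInt h b c ->
  RInt h a b + RInt h b c = RInt h a c.
Proof. intros H1 H2. apply (RInt_Chasles h a b c H1 H2). Qed.

Lemma RInt_point_R (h : R -> R) a : RInt h a a = 0.
Proof. apply (RInt_point a h). Qed.

Lemma RInt_const_R (a b c : R) : RInt (fun _ => c) a b = (b - a) * c.
Proof. rewrite RInt_const. reflexivity. Qed.

Lemma abs_RInt_le_R (h : R -> R) a b : a <= b -> ex_RInt h a b ->
  Rabs (RInt h a b) <= RInt (fun t => Rabs (h t)) a b.
Proof. intros; apply abs_RInt_le; auto. Qed.

Lemma RInt_abs_bound (h : R -> R) a b M : a <= b -> (forall x, a <= x <= b -> continuity_pt h x) ->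
  (forall x, a <= x <= b -> Rabs (h x) <= M) -> Rabs (RInt h a b) <= M * (b - a).
Proof.
  intros Hab Hc Hb. eapply Rle_trans; [apply abs_RInt_le_R; [lra|apply ex_RInt_segment; auto]|].
  rewrite Rmult_comm, <- RInt_const_R. apply RInt_le; [lra| | |intros x Hx; apply Hb; lra].
  - apply ex_RInt_segment; auto. intros x Hx. apply cont_abs; auto.
  - apply ex_RInt_segment; auto. intros; apply cont_const.
Qed.

Definition ext0 (g : R -> R) (y : R) := g (Rmax 0 y).

Definition cont_nonneg (g : R -> R) := forall t, 0 <= t -> forall eps, 0 < eps -> exists d, 0 < d /\
  forall x, 0 <= x -> Rabs (x - t) < d -> Rabs (g x - g t) < eps.

Lemma Rmax_lip a b c : Rabs (Rmax c a - Rmax c b) <= Rabs (a - b).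
Proof. unfold Rmax; repeat destruct Rle_dec; unfold Rabs; repeat destruct Rcase_abs; lra. Qed.

Lemma Rmax_lip' a b c : Rabs (Rmax a c - Rmax b c) <= Rabs (a - b).
Proof. unfold Rmax; repeat destruct Rle_dec; unfold Rabs; repeat destruct Rcase_abs; lra. Qed.

Lemma ext0_eq g t : 0 <= t -> ext0 g t = g t.
Proof. intros; unfold ext0; rewrite Rmax_right; auto. Qed.

Lemma ext0_continuous g : cont_nonneg g -> forall x, continuity_pt (ext0 g) x.
Proof.
  intros H x eps Heps. destruct (H (Rmax 0 x) (Rmax_l _ _) eps Heps) as [d [Hd Hd']].
  exists d; split; auto. intros y [_ Hy]. simpl in *. unfold R_dist, ext0 in *.
  apply Hd'. apply Rmax_l. eapply Rle_lt_trans; [apply Rmax_lip|]; auto.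
Qed.

Lemma cont_nonneg_interior g : cont_nonneg g -> forall t, 0 < t -> continuity_pt g t.
Proof.
  intros H t Ht eps Heps. destruct (H t (Rlt_le _ _ Ht) eps Heps) as [d [Hd Hd']].
  exists (Rmin d t); split; [apply Rmin_pos; auto|]. intros y [_ Hy]. simpl in *. unfold R_dist in *.
  pose proof (Rmin_l d t); pose proof (Rmin_r d t).
  apply Hd'; [|lra]. apply Rabs_def2 in Hy; lra.
Qed.

Lemma cont_nonneg_of_limit k : continuous_nonneg k -> cont_nonneg k.
Proof.
  intros H t Ht eps Heps. destruct (H t Ht eps Heps) as [a [Ha Ha']].
  exists a; split; auto. intros x Hx Hxt. apply (Ha' x); split; auto.
Qed.

Lemma cont_nonneg_pos_part k : cont_nonneg k -> cont_nonneg (fun u => Rmax (k u) 0).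
Proof.
  intros H t Ht eps Heps. destruct (H t Ht eps Heps) as [d [Hd Hd']]. exists d; split; auto.
  intros x Hx Hxt. eapply Rle_lt_trans; [apply Rmax_lip'|]. auto.
Qed.

Lemma deriv_nonneg_interior g g' : deriv_nonneg g g' -> forall t, 0 < t -> is_derive g t (g' t).
Proof.
  intros H t Ht. apply is_derive_Reals. intros eps Heps.
  destruct (H t (Rlt_le _ _ Ht) eps Heps) as [a [Ha Ha']].
  exists (mkposreal (Rmin a t) (Rmin_pos _ _ Ha Ht)). intros h Hh Hh2. simpl in Hh2.
  pose proof (Rmin_l a t); pose proof (Rmin_r a t).
  apply (Ha' h). split. split; auto. apply Rabs_def2 in Hh2; lra.
  simpl; unfold R_dist; rewrite Rminus_0_r; lra.
Qed.

Lemma cont_nonneg_of_deriv g g' : deriv_nonneg g g' -> cont_nonneg g.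
Proof.
  intros H t Ht eps Heps. destruct (H t Ht 1 Rlt_0_1) as [a [Ha Ha']].
  set (c := Rabs (g' t) + 1).
  assert (Hc : 0 < c) by (unfold c; pose proof (Rabs_pos (g' t)); lra).
  exists (Rmin a (eps / c)); split; [apply Rmin_pos; auto; apply Rdiv_lt_0_compat; auto|].
  intros x Hx Hxt. pose proof (Rmin_l a (eps/c)); pose proof (Rmin_r a (eps/c)).
  destruct (Req_dec x t) as [->|Hne].
  - rewrite Rminus_diag, Rabs_R0; auto.
  - specialize (Ha' (x - t)). simpl in Ha'. unfold R_dist in Ha'.
    replace (t + (x - t)) with x in Ha' by ring. rewrite Rminus_0_r in Ha'.
    assert (Hq : Rabs ((g x - g t) / (x - t) - g' t) < 1) by (apply Ha'; split; [split; lra|lra]).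
    assert (Hq2 : Rabs ((g x - g t) / (x - t)) <= c).
    { unfold c. pose proof (Rabs_triang ((g x - g t) / (x - t) - g' t) (g' t)).
      replace ((g x - g t) / (x - t) - g' t + g' t) with ((g x - g t) / (x - t)) in H2 by ring. lra. }
    replace (g x - g t) with ((g x - g t) / (x - t) * (x - t)) by (field; lra).
    rewrite Rabs_mult.
    apply Rle_lt_trans with (c * Rabs (x - t)).
    + apply Rmult_le_compat_r; [apply Rabs_pos|auto].
    + apply Rlt_le_trans with (c * (eps / c)). apply Rmult_lt_compat_l; lra.
      right; field; lra.
Qed.

Lemma ext0_derive g g' s : 0 < s -> is_derive g s g' -> is_derive (ext0 g) s g'.
Proof.
  intros Hs H. apply is_derive_ext_loc with g; auto.
  exists (mkposreal s Hs). intros y Hy. unfold ball in Hy; simpl in Hy. unfold AbsRing_ball in Hy.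
  simpl in Hy. unfold abs, minus, plus, opp in Hy; simpl in Hy.
  unfold ext0; rewrite Rmax_right; auto. apply Rabs_def2 in Hy. lra.
Qed.

Lemma mvt_nonneg (g g' : R -> R) a b : 0 <= a -> a <= b -> cont_nonneg g ->
  (forall t, 0 < t -> is_derive g t (g' t)) ->
  exists c, a <= c <= b /\ g b - g a = g' c * (b - a).
Proof.
  intros Ha Hab Hrc Hd.
  destruct (MVT_gen (ext0 g) a b g') as [c [Hc Hc']].
  - intros x Hx. rewrite Rmin_left, Rmax_right in Hx by lra.
    apply is_derive_ext_loc with g; [|apply Hd; lra].
    exists (mkposreal x ltac:(lra)). intros y Hy. unfold ball in Hy; simpl in Hy. unfold AbsRing_ball in Hy.
    simpl in Hy. unfold abs, minus, plus, opp in Hy; simpl in Hy.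
    unfold ext0; rewrite Rmax_right; auto. apply Rabs_def2 in Hy. lra.
  - intros x _. apply ext0_continuous; auto.
  - rewrite Rmin_left, Rmax_right in Hc by lra. exists c; split; auto.
    unfold ext0 in Hc'; rewrite !Rmax_right in Hc' by lra. auto.
Qed.

(** The Jacobi equation f'' + kappa f = 0, f(0) = 0, f'(0) = 1 (with f1 = f') *)

Definition jacobi (kappa f f1 : R -> R) : Prop :=
  continuous_nonneg kappa /\ deriv_nonneg f f1 /\ deriv_nonneg f1 (fun t => - kappa t * f t) /\
  f 0 = 0 /\ f1 0 = 1.

Lemma jacobi_regularity kappa f f1 : jacobi kappa f f1 ->
  cont_nonneg kappa /\ cont_nonneg f /\ cont_nonneg f1 /\ (forall t, 0 < t -> is_derive f t (f1 t)) /\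
  (forall t, 0 < t -> is_derive f1 t (- kappa t * f t)).
Proof.
  intros [Hk [Hf [Hf1 [H0 H1]]]]. split; [|split; [|split; [|split]]].
  - apply cont_nonneg_of_limit; auto.
  - eapply cont_nonneg_of_deriv; eauto.
  - eapply cont_nonneg_of_deriv; eauto.
  - apply deriv_nonneg_interior; auto.
  - intros t Ht. apply (deriv_nonneg_interior _ _ Hf1); auto.
Qed.

Lemma jacobi_near_0 kappa f f1 : jacobi kappa f f1 ->
  exists s1, 0 < s1 < 1 /\ forall s, 0 <= s <= s1 ->
    1/2 <= f1 s <= 3/2 /\ s / 2 <= f s <= 3 * s / 2.
Proof.
  intros HF. destruct (jacobi_regularity _ _ _ HF) as [Hk [Hf [Hf1 [Hd Hd1]]]].
  destruct HF as [_ [_ [_ [H0 H1]]]].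
  destruct (Hf1 0 (Rle_refl 0) (1/2) ltac:(lra)) as [d [Hd0 Hd']].
  exists (Rmin (d/2) (1/2)). pose proof (Rmin_l (d/2) (1/2)); pose proof (Rmin_r (d/2) (1/2)).
  split; [split; [apply Rmin_pos; lra| lra]|].
  assert (Hb : forall s, 0 <= s <= Rmin (d/2) (1/2) -> 1/2 <= f1 s <= 3/2).
  { intros s Hs. assert (Hq : Rabs (f1 s - f1 0) < 1/2) by (apply Hd'; [lra|]; rewrite Rminus_0_r, Rabs_right; lra).
    rewrite H1 in Hq. apply Rabs_def2 in Hq. lra. }
  intros s Hs. split; [apply Hb; auto|].
  destruct (mvt_nonneg f f1 0 s) as [c [Hc Hc']]; try lra; auto.
  rewrite H0, !Rminus_0_r in Hc'. specialize (Hb c ltac:(lra)). rewrite Hc'. split; nra.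
Qed.

(** Positivity of f on (0, delta0] *)

Definition kappa_plus (kappa : R -> R) (u : R) : R := Rmax (ext0 kappa u) 0.

Lemma kappa_plus_continuous kappa : cont_nonneg kappa -> forall x, continuity_pt (kappa_plus kappa) x.
Proof. intros Hk x. exact (ext0_continuous _ (cont_nonneg_pos_part _ Hk) x). Qed.

Lemma kappa_plus_dominates kappa f m z : 0 <= z -> 0 <= f z <= m ->
  0 <= m * kappa_plus kappa z - ext0 kappa z * ext0 f z.
Proof.
  intros Hz Hf. unfold kappa_plus. rewrite (ext0_eq f) by lra.
  unfold Rmax at 1; destruct Rle_dec; nra.
Qed.

Lemma first_zero (f : R -> R) s1 d0 : 0 < s1 -> s1 <= d0 -> cont_nonneg f ->
  (forall z, 0 < z <= s1 -> 0 < f z) -> (exists s, 0 < s <= d0 /\ f s <= 0) ->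
  exists t0, s1 <= t0 <= d0 /\ f t0 = 0 /\ forall z, 0 < z < t0 -> 0 < f z.
Proof.
  intros Hs1 Hs1d Hf Hpos [s [Hs Hfs]].
  set (E := fun y => s1 <= y <= d0 /\ forall z, 0 < z <= y -> 0 < f z).
  assert (HEs1 : E s1) by (split; [lra|exact Hpos]).
  assert (HEb : bound E) by (exists d0; intros y [Hy _]; lra).
  destruct (completeness E HEb (ex_intro _ s1 HEs1)) as [t0 [Hub Hlub]].
  assert (Hs1t0 : s1 <= t0) by (apply Hub; exact HEs1).
  assert (Ht0d0 : t0 <= d0) by (apply Hlub; intros y [Hy _]; lra).
  assert (Hbelow : forall z, 0 < z < t0 -> 0 < f z).
  { intros z Hz. destruct (classic (is_upper_bound E z)) as [Hu|Hu].
    - specialize (Hlub z Hu). lra.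
    - apply not_all_ex_not in Hu as [y Hy]. apply imply_to_and in Hy as [[_ Hy] Hzy].
      apply Hy. lra. }
  assert (Hct0 : continuity_pt f t0) by (apply cont_nonneg_interior; auto; lra).
  exists t0. split; [lra|]. split; [|exact Hbelow].
  destruct (Rtotal_order (f t0) 0) as [Hneg|[Hzero|Hposv]]; auto; exfalso.
  - (* f stays negative just left of t0, where it is positive *)
    assert (Hc' : continuity_pt (fun x => - f x) t0).
    { apply cont_ext with (fun x => 0 - f x). apply cont_sub; [apply cont_const|auto]. intros; ring. }
    destruct (sign_persistence _ _ Hc' ltac:(lra)) as [d [Hd Hd']].
    set (z := Rmax (t0 - d/2) (t0/2)).
    assert (Hz : 0 < z < t0) by (unfold z; unfold Rmax; destruct Rle_dec; lra).
    assert (Hzd : Rabs (z - t0) < d) by (unfold z; unfold Rmax; destruct Rle_dec; rewrite Rabs_left; lra).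
    specialize (Hbelow z Hz). specialize (Hd' z Hzd). lra.
  - (* f stays positive just right of t0, contradicting maximality of t0 *)
    destruct (sign_persistence _ _ Hct0 Hposv) as [d [Hd Hd']].
    destruct (Rlt_dec t0 d0) as [Hlt|Hge].
    + set (y := Rmin (t0 + d/2) d0).
      assert (HEy : E y).
      { split; [unfold y; unfold Rmin; destruct Rle_dec; lra|].
        intros z Hz. destruct (Rlt_dec z t0); [apply Hbelow; lra|].
        apply Hd'. unfold y in Hz. pose proof (Rmin_l (t0 + d/2) d0). rewrite Rabs_right; lra. }
      specialize (Hub y HEy). unfold y, Rmin in Hub; destruct Rle_dec; lra.
    + assert (t0 = d0) by lra. subst t0.
      destruct (Rlt_dec s d0); [specialize (Hbelow s ltac:(lra)); lra|].
      assert (s = d0) by lra. subst s. lra.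
Qed.

Lemma interior_maximum (f f1 : R -> R) t0 : 0 < t0 -> f 0 = 0 -> f t0 = 0 ->
  (forall z, 0 < z < t0 -> 0 < f z) -> cont_nonneg f ->
  (forall t, 0 < t -> is_derive f t (f1 t)) ->
  exists t1, 0 < t1 < t0 /\ 0 < f t1 /\ f1 t1 = 0 /\ forall z, 0 <= z <= t0 -> 0 <= f z <= f t1.
Proof.
  intros Ht0 F0 Ft0 Hpos Hf Hd.
  destruct (continuity_ab_maj (ext0 f) 0 t0 ltac:(lra)) as [t1 [Hmax Ht1]].
  { intros; apply ext0_continuous; auto. }
  assert (Hmax' : forall z, 0 <= z <= t0 -> f z <= f t1).
  { intros z Hz. specialize (Hmax z Hz). unfold ext0 in Hmax. rewrite !Rmax_right in Hmax by lra. auto. }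
  assert (Hm : 0 < f t1) by (pose proof (Hpos (t0/2) ltac:(lra)); pose proof (Hmax' (t0/2) ltac:(lra)); lra).
  assert (Ht1' : 0 < t1 < t0).
  { split; [destruct (Req_dec t1 0) as [->|]; lra|destruct (Req_dec t1 t0) as [->|]; lra]. }
  exists t1. split; [exact Ht1'|]. split; [exact Hm|]. split.
  - pose proof (Hd t1 (proj1 Ht1')) as Hdt1. apply is_derive_Reals in Hdt1.
    set (prd := exist _ (f1 t1) Hdt1 : derivable_pt f t1).
    rewrite <- (derive_pt_eq_0 f t1 (f1 t1) prd Hdt1).
    apply (deriv_maximum f 0 t0 t1 prd); try lra. intros x Hx1 Hx2. apply Hmax'; lra.
  - intros z Hz. split; [|apply Hmax'; auto].
    destruct (Req_dec z 0) as [->|]; [lra|]. destruct (Req_dec z t0) as [->|]; [lra|].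
    left; apply Hpos; lra.
Qed.

(* Left comparison: on [0, t1], where 0 <= f <= m = f(t1) and f'(t1) = 0, the function
   s f'(s) - f(s) + m int_0^s u kappa_+ is nondecreasing, whence int_0^t1 u kappa_+ >= 1. *)
Lemma comparison_left kappa f f1 t1 : jacobi kappa f f1 -> 0 < t1 -> f1 t1 = 0 -> 0 < f t1 ->
  (forall z, 0 <= z <= t1 -> 0 <= f z <= f t1) ->
  1 <= RInt (fun u => u * kappa_plus kappa u) 0 t1.
Proof.
  intros HF Ht1 Hf1t1 Hm Hbnd.
  destruct (jacobi_regularity _ _ _ HF) as [Hk [Hf [Hf1 [Hd Hd1]]]].
  pose proof HF as [_ [_ [_ [F0 _]]]].
  set (m := f t1) in *. set (kp := fun u => u * kappa_plus kappa u).
  assert (Ckp : forall x, continuity_pt kp x)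
    by (intros; apply cont_mul; [apply cont_id|apply kappa_plus_continuous; auto]).
  set (P := fun s => RInt kp 0 s).
  set (Z := fun s => s * ext0 f1 s - ext0 f s + m * P s).
  assert (HZ : Z 0 <= Z t1).
  { apply (nondecreasing_by_mvt Z (fun s => s * (m * kappa_plus kappa s - ext0 kappa s * ext0 f s))); [lra| | |].
    - intros x Hx. unfold Z. eapply der_eq_val.
      + apply der_add; [apply der_sub; [apply der_mul; [apply der_id|apply ext0_derive; [lra|apply Hd1; lra]]
                                      |apply ext0_derive; [lra|apply Hd; lra]]|].
        apply (is_derive_scal (fun s => P s) x m). apply derive_primitive; auto.
      + unfold kp, kappa_plus, ext0; rewrite !Rmax_right by lra. ring.
    - intros x _. unfold Z. apply cont_add; [apply cont_sub; [apply cont_mul; [apply cont_id|apply ext0_continuous; auto]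
                                                              |apply ext0_continuous; auto]|].
      apply cont_mul; [apply cont_const|]. eapply cont_of_der; apply derive_primitive; auto.
    - intros x Hx. apply Rmult_le_pos; [lra|]. apply kappa_plus_dominates; [lra|apply Hbnd; lra]. }
  unfold Z, P in HZ. rewrite !ext0_eq, RInt_point_R, Hf1t1, F0 in HZ by lra.
  unfold P, m in *. apply Rmult_le_reg_l with (f t1); [lra|]. lra.
Qed.

(* Right comparison: on [t1, t0], where f(t0) = 0, the function
   (t0 - s) f'(s) + f(s) + m int_t1^s (t0 - u) kappa_+ is nondecreasing, whence
   int_t1^t0 (t0 - u) kappa_+ >= 1. *)
Lemma comparison_right kappa f f1 t1 t0 : jacobi kappa f f1 -> 0 < t1 < t0 -> f1 t1 = 0 -> 0 < f t1 ->
  f t0 = 0 -> (forall z, t1 <= z <= t0 -> 0 <= f z <= f t1) ->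
  1 <= RInt (fun u => (t0 - u) * kappa_plus kappa u) t1 t0.
Proof.
  intros HF Ht Hf1t1 Hm Hft0 Hbnd.
  destruct (jacobi_regularity _ _ _ HF) as [Hk [Hf [Hf1 [Hd Hd1]]]].
  set (m := f t1) in *. set (kq := fun u => (t0 - u) * kappa_plus kappa u).
  assert (Ckq : forall x, continuity_pt kq x).
  { intros; apply cont_mul; [apply cont_sub; [apply cont_const|apply cont_id]|apply kappa_plus_continuous; auto]. }
  set (Q := fun s => RInt kq t1 s).
  set (Y := fun s => (t0 - s) * ext0 f1 s + ext0 f s + m * Q s).
  assert (HY : Y t1 <= Y t0).
  { apply (nondecreasing_by_mvt Y (fun s => (t0 - s) * (m * kappa_plus kappa s - ext0 kappa s * ext0 f s))); [lra| | |].
    - intros x Hx. unfold Y. eapply der_eq_val.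
      + apply der_add; [apply der_add; [apply der_mul; [apply der_sub; [apply der_const|apply der_id]
                                                       |apply ext0_derive; [lra|apply Hd1; lra]]
                                      |apply ext0_derive; [lra|apply Hd; lra]]|].
        apply (is_derive_scal (fun s => Q s) x m). apply derive_primitive; auto.
      + unfold kq, kappa_plus, ext0; rewrite !Rmax_right by lra. ring.
    - intros x _. unfold Y.
      apply cont_add; [apply cont_add; [apply cont_mul; [apply cont_sub; [apply cont_const|apply cont_id]
                                                         |apply ext0_continuous; auto]
                                      |apply ext0_continuous; auto]|].
      apply cont_mul; [apply cont_const|]. eapply cont_of_der; apply derive_primitive; auto.
    - intros x Hx. apply Rmult_le_pos; [lra|]. apply kappa_plus_dominates; [lra|apply Hbnd; lra]. }
  unfold Y, Q in HY. rewrite !ext0_eq, RInt_point_R, Hf1t1, Hft0 in HY by lra.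
  unfold Q, m in *. apply Rmult_le_reg_l with (f t1); [lra|]. lra.
Qed.

(* Under the smallness condition int_0^delta0 s kappa_+(s) ds <= 1, f > 0 on (0, delta0]:
   otherwise, at a first zero t0 with interior maximum point t1, the two comparisons give
   int_0^t1 s kappa_+ >= 1 and int_t1^t0 (t0 - s) kappa_+ >= 1 > 0, whereas
   (t0 - s) <= (t0/t1) s there and int_0^t0 s kappa_+ <= 1. *)
Lemma jacobi_positive kappa f f1 d0 (pr : Riemann_integrable (fun s => s * Rmax (kappa s) 0) 0 d0) :
  jacobi kappa f f1 -> 1 < d0 -> RiemannInt pr <= 1 -> forall s, 0 < s <= d0 -> 0 < f s.
Proof.
  intros HF Hd0 Hint.
  destruct (jacobi_regularity _ _ _ HF) as [Hk [Hf [Hf1 [Hd Hd1]]]].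
  destruct (jacobi_near_0 _ _ _ HF) as [s1 [Hs1 Hs1']].
  pose proof HF as [_ [_ [_ [F0 _]]]].
  set (kp := fun u => u * kappa_plus kappa u).
  assert (Ckp : forall x, continuity_pt kp x)
    by (intros; apply cont_mul; [apply cont_id|apply kappa_plus_continuous; auto]).
  assert (HPd0 : RInt kp 0 d0 <= 1).
  { rewrite <- (RInt_Reals _ _ _ pr) in Hint.
    rewrite (RInt_ext kp (fun s => s * Rmax (kappa s) 0)); auto.
    intros x Hx. rewrite Rmin_left, Rmax_right in Hx by lra.
    unfold kp, kappa_plus, ext0. rewrite (Rmax_right 0 x); lra. }
  apply NNPP; intro Hneg.
  apply not_all_ex_not in Hneg as [s Hs]. apply imply_to_and in Hs as [Hs Hfs]. apply Rnot_lt_le in Hfs.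
  destruct (first_zero f s1 d0) as [t0 [Ht0 [Hft0 Hpos]]]; try lra; auto.
  { intros z Hz. pose proof (Hs1' z ltac:(lra)); lra. }
  { exists s; auto. }
  destruct (interior_maximum f f1 t0) as [t1 [Ht1 [Hm [Hf1t1 Hbnd]]]]; auto; try lra.
  pose proof (comparison_left kappa f f1 t1 HF ltac:(lra) Hf1t1 Hm ltac:(intros; apply Hbnd; lra)) as HL.
  pose proof (comparison_right kappa f f1 t1 t0 HF Ht1 Hf1t1 Hm Hft0 ltac:(intros; apply Hbnd; lra)) as HR.
  assert (HQle : RInt (fun u => (t0 - u) * kappa_plus kappa u) t1 t0 <= t0 / t1 * RInt kp t1 t0).
  { rewrite <- (RInt_scal_R kp t1 t0 (t0/t1)) by (apply ex_RInt_cont; auto).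
    apply RInt_le; [lra|apply ex_RInt_cont; intros; apply cont_mul; [apply cont_sub; [apply cont_const|apply cont_id]|apply kappa_plus_continuous; auto]
                   |apply ex_RInt_cont; intros; apply cont_mul; [apply cont_const|auto]|].
    intros x Hx. unfold kp. assert (Hk0 : 0 <= kappa_plus kappa x) by apply Rmax_r.
    assert (t0 - x <= t0 / t1 * x).
    { apply Rle_trans with t0; [lra|]. replace t0 with (t0 / t1 * t1) at 1 by (field; lra).
      apply Rmult_le_compat_l; [apply Rlt_le, Rdiv_lt_0_compat|]; lra. }
    nra. }
  assert (HC1 : RInt kp 0 t1 + RInt kp t1 t0 = RInt kp 0 t0) by (apply RInt_Chasles_R; apply ex_RInt_cont; auto).
  assert (HC2 : RInt kp 0 t0 + RInt kp t0 d0 = RInt kp 0 d0) by (apply RInt_Chasles_R; apply ex_RInt_cont; auto).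
  assert (0 <= RInt kp t0 d0).
  { apply RInt_ge_0; [lra|apply ex_RInt_cont; auto|]. intros x Hx. unfold kp. apply Rmult_le_pos; [lra|apply Rmax_r]. }
  assert (0 < t0 / t1) by (apply Rdiv_lt_0_compat; lra).
  fold kp in HL.
  assert (RInt kp t1 t0 <= 0) by lra.
  assert (t0 / t1 * RInt kp t1 t0 <= 0) by nra.
  lra.
Qed.

Lemma ball0 (h d : R) : ball (0:R) d h <-> Rabs h < d.
Proof.
  unfold ball; simpl; unfold AbsRing_ball; simpl. unfold abs, minus, plus, opp; simpl.
  rewrite Ropp_0, Rplus_0_r. tauto.
Qed.

Lemma ball0_1 (h d : R) : ball (0:R) d h -> Rabs h < d.
Proof. apply ball0. Qed.

Lemma ball0_2 (h d : R) : Rabs h < d -> ball (0:R) d h.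
Proof. apply ball0. Qed.

Lemma derive_of_quotient_limit (f : R -> R) (x l : R) :
  is_lim (fun h => (f (x + h) - f x) / h) 0 l -> is_derive f x l.
Proof.
  intros H. apply is_derive_Reals. apply is_lim_spec in H. unfold is_lim' in H. intros eps Heps.
  destruct (H (mkposreal eps Heps)) as [d Hd]. exists d. intros h Hh Hh2.
  apply Hd; auto. apply ball0; auto.
Qed.

Lemma quotient_limit_of_derive (f : R -> R) (x l : R) :
  is_derive f x l -> is_lim (fun h => (f (x + h) - f x) / h) 0 l.
Proof.
  intros H. apply is_derive_Reals in H. apply is_lim_spec. unfold is_lim'. intros eps.
  destruct (H eps (cond_pos eps)) as [d Hd]. exists d. intros h Hh Hh2.
  apply Hd; auto. exact (proj1 (ball0 h d) Hh).
Qed.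

Lemma derive_inverse (S Rf : R -> R) (x lS lR : R) :
  is_derive S (Rf x) lS -> lS <> 0 -> continuity_pt Rf x ->
  (exists d, 0 < d /\ forall y, y <> x -> Rabs (y - x) < d -> S (Rf y) <> S (Rf x)) ->
  is_derive (fun y => S (Rf y)) x lR -> is_derive Rf x (lR / lS).
Proof.
  intros HS HlS HR [d [Hd Hinj]] HSR.
  apply derive_of_quotient_limit. apply quotient_limit_of_derive in HSR.
  set (D := fun y => (S y - S (Rf x)) / (y - Rf x)).
  assert (HD : is_lim D (Rf x) lS).
  { apply quotient_limit_of_derive in HS. apply is_lim_spec. apply is_lim_spec in HS. unfold is_lim' in *. intros eps.
    destruct (HS eps) as [a Ha]. exists a. intros y Hy Hne. change R in y.
    specialize (Ha (y - Rf x)). unfold D. replace (Rf x + (y - Rf x)) with y in Ha by ring. apply Ha.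
    apply ball0. unfold ball in Hy; simpl in Hy; unfold AbsRing_ball in Hy; simpl in Hy. auto.
    intro; apply Hne; lra. }
  assert (HRl : is_lim (fun h => Rf (x + h)) 0 (Rf x)).
  { apply is_lim_spec. unfold is_lim'. intros eps. destruct (HR eps (cond_pos eps)) as [a [Ha Ha']].
    exists (mkposreal a Ha). intros h Hh Hh0. change R in h.
    apply ball0_1 in Hh.
    apply (Ha' (x + h)). split. split; [exact I|intro; apply Hh0; lra].
    simpl; unfold R_dist. replace (x + h - x) with h by ring. auto. }
  assert (Hne : Rbar_locally' 0 (fun h => S (Rf (x + h)) <> S (Rf x))).
  { exists (mkposreal d Hd). intros h Hh Hh0. change R in h. apply ball0_1 in Hh. apply Hinj. lra.
    replace (x + h - x) with h by ring. auto. }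
  assert (Hne' : Rbar_locally' 0 (fun h => Rf (x + h) <> Rf x)).
  { destruct Hne as [a Ha]. exists a. intros h Hh Hh0 E. apply (Ha h Hh Hh0). rewrite E; auto. }
  assert (HDc : is_lim (fun h => D (Rf (x + h))) 0 lS) .
  { apply (is_lim_comp D _ 0 lS (Rf x)); auto.
    destruct Hne' as [a Ha]. exists a. intros h Hh Hh0 E. apply (Ha h Hh Hh0). injection E; auto. }
  assert (Hq := is_lim_div _ _ 0 lR lS HSR HDc).
  assert (Hq' : is_lim (fun h => (S (Rf (x + h)) - S (Rf x)) / h / D (Rf (x + h))) 0 (lR / lS)).
  { apply Hq. intro Hc; apply HlS; injection Hc; auto. simpl; auto. }
  eapply is_lim_ext_loc; [|exact Hq'].
  destruct Hne as [a Ha]. destruct Hne' as [b Hb]. exists (mkposreal (Rmin a b) (Rmin_pos _ _ (cond_pos a) (cond_pos b))).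
  intros h Hh Hh0. change R in h. apply ball0_1 in Hh. simpl in Hh.
  assert (Ha' : S (Rf (x + h)) <> S (Rf x)) by (apply Ha; auto; apply ball0_2; pose proof (Rmin_l a b); lra).
  assert (Hb' : Rf (x + h) <> Rf x) by (apply Hb; auto; apply ball0_2; pose proof (Rmin_r a b); lra).
  unfold D. field. repeat split; auto; intro; lra.
Qed.

(** The function sigma and the map r_A *)

Definition jacobi_pos kappa f f1 d0 := jacobi kappa f f1 /\ 1 < d0 /\ forall s, 0 < s <= d0 -> 0 < f s.

(* sigma with an everywhere continuous integrand: sigma0 f k x = int_0^x f(max(0, s))^k ds,
   which agrees with sigma on [0, +oo). *)
Definition sigma0 (f : R -> R) (k : nat) (x : R) := RInt (fun s => ext0 f s ^ k) 0 x.

Lemma jacobi_pos_regularity kappa f f1 d0 : jacobi_pos kappa f f1 d0 ->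
  cont_nonneg kappa /\ cont_nonneg f /\ cont_nonneg f1 /\ (forall t, 0 < t -> is_derive f t (f1 t)) /\
  (forall t, 0 < t -> is_derive f1 t (- kappa t * f t)) /\ (forall s, 0 <= s <= d0 -> 0 <= f s).
Proof.
  intros [HF [Hd0 Hp]]. destruct (jacobi_regularity _ _ _ HF) as [A [B [C [D E]]]].
  repeat (split; auto). intros s Hs. destruct (Req_dec s 0) as [->|].
  destruct HF as [_ [_ [_ [F0 _]]]]; lra. left; apply Hp; lra.
Qed.

Lemma jacobi_pos_min kappa f f1 d0 a b : jacobi_pos kappa f f1 d0 -> 0 < a -> a <= b -> b <= d0 ->
  exists m, 0 < m /\ forall s, a <= s <= b -> m <= f s.
Proof.
  intros HP Ha Hab Hb. destruct (jacobi_pos_regularity _ _ _ _ HP) as [_ [Hf _]].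
  destruct (continuity_ab_min (ext0 f) a b Hab) as [mx [Hmx Hmx']]. intros; apply ext0_continuous; auto.
  exists (f mx). destruct HP as [_ [_ Hp]]. split. apply Hp; lra.
  intros s Hs. specialize (Hmx s Hs). unfold ext0 in Hmx. rewrite !Rmax_right in Hmx by lra. auto.
Qed.

Lemma jacobi_bounds kappa f f1 d0 : jacobi_pos kappa f f1 d0 ->
  exists L, 0 < L /\ forall s, 0 <= s <= d0 -> Rabs (f s) <= L /\ Rabs (f1 s) <= L /\ Rabs (kappa s * f s) <= L.
Proof.
  intros HP. destruct (jacobi_pos_regularity _ _ _ _ HP) as [Hk [Hf [Hf1 _]]]. destruct HP as [_ [Hd0 _]].
  destruct (bounded_on_segment (ext0 f) 0 d0) as [M1 [HM1 HM1']]; [lra|intros; apply ext0_continuous; auto|].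
  destruct (bounded_on_segment (ext0 f1) 0 d0) as [M2 [HM2 HM2']]; [lra|intros; apply ext0_continuous; auto|].
  destruct (bounded_on_segment (fun s => ext0 kappa s * ext0 f s) 0 d0) as [M3 [HM3 HM3']]; [lra|intros; apply cont_mul; apply ext0_continuous; auto|].
  exists (M1 + M2 + M3 + 1). split; [lra|]. intros s Hs.
  specialize (HM1' s Hs); specialize (HM2' s Hs); specialize (HM3' s Hs). unfold ext0 in *.
  rewrite !Rmax_right in * by lra. repeat split; lra.
Qed.

Lemma cont_ext0_pow f k : cont_nonneg f -> forall x, continuity_pt (fun s => ext0 f s ^ k) x.
Proof. intros H x. apply cont_pow. apply ext0_continuous; auto. Qed.

Lemma sigma0_derive f k : cont_nonneg f -> forall x, is_derive (sigma0 f k) x (ext0 f x ^ k).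
Proof. intros H x. apply (derive_primitive (fun s => ext0 f s ^ k)). apply cont_ext0_pow; auto. Qed.

Lemma sigma0_continuous f k : cont_nonneg f -> forall x, continuity_pt (sigma0 f k) x.
Proof. intros H x. eapply cont_of_der. apply sigma0_derive; auto. Qed.

Lemma sigma0_diff f k a b : cont_nonneg f -> sigma0 f k b - sigma0 f k a = RInt (fun s => ext0 f s ^ k) a b.
Proof.
  intros H. unfold sigma0. rewrite <- (RInt_Chasles_R _ 0 a b); try (apply ex_RInt_cont; apply cont_ext0_pow; auto). ring.
Qed.

Lemma sigma0_lower_bound f k a b m : cont_nonneg f -> a <= b -> 0 <= m -> (forall s, a <= s <= b -> m <= ext0 f s) ->
  (b - a) * m ^ k <= sigma0 f k b - sigma0 f k a.
Proof.
  intros H Hab Hm Hs. rewrite sigma0_diff by auto. rewrite <- RInt_const_R.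
  apply RInt_le; auto. apply ex_RInt_cont; intros; apply cont_const. apply ex_RInt_cont; apply cont_ext0_pow; auto.
  intros x Hx. apply pow_incr. split; auto. apply Hs; lra.
Qed.

Lemma sigma0_at_0 f k : sigma0 f k 0 = 0.
Proof. unfold sigma0. apply RInt_point_R. Qed.

Lemma sigmaf_eq_sigma0 f n t : cont_nonneg f -> 0 <= t -> sigmaf n f t = sigma0 f (n - 1) t.
Proof.
  intros H Ht. unfold sigmaf.
  assert (Hex : ex_RInt (fun s => f s ^ (n - 1)) 0 t).
  { apply ex_RInt_ext with (fun s => ext0 f s ^ (n - 1)). intros x Hx. rewrite Rmin_left, Rmax_right in Hx by lra.
    unfold ext0; rewrite Rmax_right; lra. apply ex_RInt_cont; apply cont_ext0_pow; auto. }
  destruct (Defs_RInt_correct _ _ _ Hex) as [_ ->]. unfold sigma0. apply RInt_ext.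
  intros x Hx. rewrite Rmin_left, Rmax_right in Hx by lra. unfold ext0; rewrite Rmax_right; lra.
Qed.

Lemma sigma0_strict kappa f f1 d0 k a b : jacobi_pos kappa f f1 d0 -> 0 <= a -> a < b -> b <= d0 ->
  sigma0 f k a < sigma0 f k b.
Proof.
  intros HP Ha Hab Hb. destruct (jacobi_pos_regularity _ _ _ _ HP) as [_ [Hf [_ [_ [_ Hnn]]]]].
  destruct (jacobi_pos_min _ _ _ _ ((a + b)/2) b HP) as [m [Hm Hm']]; try lra.
  pose proof (sigma0_lower_bound f k ((a+b)/2) b m Hf ltac:(lra) ltac:(lra)) as H1.
  pose proof (sigma0_lower_bound f k a ((a+b)/2) 0 Hf ltac:(lra) ltac:(lra)) as H2.
  assert (0 < (b - (a + b) / 2) * m ^ k) by (apply Rmult_lt_0_compat; [lra|apply pow_lt; auto]).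
  assert (0 <= ((a + b) / 2 - a) * 0 ^ k).
  { apply Rmult_le_pos; [lra|]. apply pow_le; lra. }
  cut (sigma0 f k a <= sigma0 f k ((a+b)/2)); [intros; enough (sigma0 f k ((a+b)/2) < sigma0 f k b) by lra|].
  - enough ((b - (a + b) / 2) * m ^ k <= sigma0 f k b - sigma0 f k ((a + b) / 2)) by lra.
    apply H1. intros s Hs. unfold ext0; rewrite Rmax_right by lra. apply Hm'; lra.
  - enough (0 <= sigma0 f k ((a + b) / 2) - sigma0 f k a) by lra.
    eapply Rle_trans; [exact H0|]. apply H2. intros s Hs. unfold ext0; rewrite Rmax_right by lra. apply Hnn; lra.
Qed.

Lemma sigma0_nonneg kappa f f1 d0 k x : jacobi_pos kappa f f1 d0 -> 0 <= x <= d0 -> 0 <= sigma0 f k x.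
Proof.
  intros HP Hx. destruct (Req_dec x 0) as [->|]. rewrite sigma0_at_0; lra.
  pose proof (sigma0_strict _ _ _ _ k 0 x HP). rewrite sigma0_at_0 in H0. left; apply H0; lra.
Qed.

Lemma sigma0_small_near_0 f k : cont_nonneg f -> forall tgt, 0 < tgt ->
  exists dl, 0 < dl /\ forall A, 0 < A < dl -> sigma0 f k A < tgt.
Proof.
  intros Hf tgt Htgt. destruct (sigma0_continuous f k Hf 0 tgt Htgt) as [dl [Hdl Hdl']].
  exists dl; split; auto. intros A HA. specialize (Hdl' A). simpl in Hdl'. unfold R_dist in Hdl'.
  rewrite sigma0_at_0, !Rminus_0_r in Hdl'.
  assert (Hq : Rabs (sigma0 f k A) < tgt) by (apply Hdl'; split; [split; [exact I|lra]|]; rewrite Rabs_right; lra).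
  apply Rabs_def2 in Hq; lra.
Qed.

Definition sinv_spec n f sinv := forall t, 0 <= t -> (forall s, 0 < s <= t -> 0 < f s) ->
     sinv (sigmaf n f t) = t.

Definition rA_spec n f sinv d0 A0 := forall A, 0 < A < A0 -> forall rho, 0 <= rho <= (1 + d0) / 2 ->
    rho < rA n f sinv A rho <= d0 /\ A <= rA n f sinv A rho /\
    sigma0 f (n - 1) (rA n f sinv A rho) = sigma0 f (n - 1) rho + sigma0 f (n - 1) A.

Lemma rA_exists kappa f f1 d0 n sinv : jacobi_pos kappa f f1 d0 -> sinv_spec n f sinv ->
  exists A0, 0 < A0 <= 1 /\ rA_spec n f sinv d0 A0.
Proof.
  intros HP Hsinv. unfold rA_spec. pose proof (jacobi_pos_regularity _ _ _ _ HP) as [_ [Hf _]]. pose proof HP as [_ [Hd0 Hpos]].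
  set (k := (n - 1)%nat). set (b1 := (1 + d0) / 2).
  assert (Hgap : 0 < sigma0 f k d0 - sigma0 f k b1) by (pose proof (sigma0_strict _ _ _ _ k b1 d0 HP); unfold b1 in *; lra).
  destruct (sigma0_small_near_0 f k Hf _ Hgap) as [dl [Hdl Hdl']].
  exists (Rmin dl 1). split; [split; [apply Rmin_pos; lra|apply Rmin_r]|].
  intros A HA rho Hrho. pose proof (Rmin_l dl 1). pose proof (Rmin_r dl 1).
  assert (HSA : sigma0 f k A < sigma0 f k d0 - sigma0 f k b1) by (apply Hdl'; lra).
  assert (HSA0 : 0 < sigma0 f k A) by (pose proof (sigma0_strict _ _ _ _ k 0 A HP); rewrite sigma0_at_0 in H1; apply H1; lra).
  assert (HSr : sigma0 f k rho <= sigma0 f k b1).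
  { destruct (Req_dec rho b1) as [->|]; [lra|]. left; apply (sigma0_strict kappa f f1 d0 k); auto; unfold b1 in *; lra. }
  assert (HSrho0 : 0 <= sigma0 f k rho) by (apply (sigma0_nonneg _ _ _ _ k _ HP); unfold b1 in *; lra).
  destruct (IVT_gen (sigma0 f k) rho d0 (sigma0 f k rho + sigma0 f k A)) as [r [Hr1 Hr2]].
  { intros x; apply sigma0_continuous; auto. }
  { rewrite Rmin_left, Rmax_right; [lra| |]; left; apply (sigma0_strict kappa f f1 d0 k); auto; unfold b1 in *; lra. }
  rewrite Rmin_left, Rmax_right in Hr1 by (unfold b1 in *; lra).
  assert (Hrr : rho < r).
  { destruct (Req_dec r rho) as [->|]; [lra|lra]. }
  assert (HAr : A <= r).
  { apply Rnot_lt_le; intro Hlt. pose proof (sigma0_strict _ _ _ _ k r A HP ltac:(lra) Hlt ltac:(lra)). lra. }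
  assert (Heq : rA n f sinv A rho = r).
  { unfold rA. rewrite !(sigmaf_eq_sigma0 f n) by (auto; unfold b1 in *; lra). fold k. rewrite <- Hr2.
    unfold k. rewrite <- sigmaf_eq_sigma0 by (auto; lra). apply Hsinv; [lra|]. intros s Hs; apply Hpos; lra. }
  rewrite Heq. repeat split; try lra.
Qed.

Lemma rA_monotone kappa f f1 d0 n sinv A0 A : jacobi_pos kappa f f1 d0 ->
  rA_spec n f sinv d0 A0 ->
  0 < A < A0 ->
  exists mA, 0 < mA /\ forall r1 r2, 0 <= r1 -> r1 <= r2 -> r2 <= (1 + d0) / 2 ->
    rA n f sinv A r1 <= rA n f sinv A r2 /\
    (rA n f sinv A r2 - rA n f sinv A r1) * mA ^ (n - 1) <= sigma0 f (n - 1) r2 - sigma0 f (n - 1) r1.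
Proof.
  intros HP HR HA. pose proof (jacobi_pos_regularity _ _ _ _ HP) as [_ [Hf _]]. pose proof HP as [_ [Hd0 Hpos]].
  assert (HAd : A <= d0) by (destruct (HR A HA 0 ltac:(lra)) as [? [? ?]]; lra).
  destruct (jacobi_pos_min _ _ _ _ A d0 HP ltac:(lra) ltac:(lra) ltac:(lra)) as [m [Hm Hm']].
  exists m; split; auto. intros r1 r2 H1 H12 H2.
  destruct (HR A HA r1 ltac:(lra)) as [Ha1 [Hb1 Hc1]]. destruct (HR A HA r2 ltac:(lra)) as [Ha2 [Hb2 Hc2]].
  assert (Hle : rA n f sinv A r1 <= rA n f sinv A r2).
  { apply Rnot_lt_le; intro Hlt.
    pose proof (sigma0_strict kappa f f1 d0 (n-1) (rA n f sinv A r2) (rA n f sinv A r1) HP ltac:(lra) Hlt ltac:(lra)).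
    destruct (Req_dec r1 r2) as [->|Hne]; [lra|].
    pose proof (sigma0_strict kappa f f1 d0 (n-1) r1 r2 HP ltac:(lra) ltac:(lra) ltac:(lra)). lra. }
  split; auto.
  assert (Hx : sigma0 f (n - 1) r2 - sigma0 f (n - 1) r1 = sigma0 f (n - 1) (rA n f sinv A r2) - sigma0 f (n - 1) (rA n f sinv A r1)) by lra.
  rewrite Hx. apply sigma0_lower_bound; auto. lra. intros s Hs. unfold ext0; rewrite Rmax_right by lra. apply Hm'; lra.
Qed.

(* r_A is continuous: its increments are bounded by those of sigma divided by (min f)^(n-1). *)
Lemma rA_continuous kappa f f1 d0 n sinv A0 A : jacobi_pos kappa f f1 d0 ->
  rA_spec n f sinv d0 A0 -> 0 < A < A0 -> forall rho, 0 < rho < (1 + d0) / 2 ->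
  continuity_pt (rA n f sinv A) rho.
Proof.
  intros HP HR HA rho Hrho. pose proof (jacobi_pos_regularity _ _ _ _ HP) as [_ [Hf _]].
  destruct (rA_monotone _ _ _ _ _ _ _ _ HP HR HA) as [m [Hm Hlip]].
  set (k := (n - 1)%nat) in *. set (b1 := (1 + d0) / 2) in *.
  assert (Hmk : 0 < m ^ k) by (apply pow_lt; auto).
  intros eps Heps. destruct (sigma0_continuous f k Hf rho (eps * m ^ k) ltac:(apply Rmult_lt_0_compat; lra)) as [d1 [Hd1 Hd1']].
  exists (Rmin d1 (Rmin rho (b1 - rho))). split. apply Rmin_pos; auto. apply Rmin_pos; lra.
  intros y [_ Hy]. simpl in *. unfold R_dist in *.
  pose proof (Rmin_l d1 (Rmin rho (b1 - rho))). pose proof (Rmin_r d1 (Rmin rho (b1 - rho))).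
  pose proof (Rmin_l rho (b1 - rho)). pose proof (Rmin_r rho (b1 - rho)).
  assert (HSy : Rabs (sigma0 f k y - sigma0 f k rho) < eps * m ^ k).
  { destruct (Req_dec y rho) as [->|Hne]. rewrite Rminus_diag, Rabs_R0. apply Rmult_lt_0_compat; lra.
    apply Hd1'. split; [split; [exact I|auto]|lra]. }
  apply Rabs_def2 in Hy. apply Rabs_def2 in HSy.
  destruct (Rle_dec rho y).
  - destruct (Hlip rho y) as [Ha Hb]; try lra.
    rewrite Rabs_right by lra. apply Rmult_lt_reg_r with (m ^ k); auto. fold k in Hb. lra.
  - destruct (Hlip y rho) as [Ha Hb]; try lra.
    rewrite Rabs_left1 by lra. apply Rmult_lt_reg_r with (m ^ k); auto. fold k in Hb. lra.
Qed.

(* Inverse function rule for sigma(r_A(rho)) = sigma(rho) + sigma(A):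
   r_A'(rho) = f(rho)^(n-1) / f(r_A(rho))^(n-1). *)
Lemma rA_derive kappa f f1 d0 n sinv A0 A : jacobi_pos kappa f f1 d0 ->
  rA_spec n f sinv d0 A0 -> 0 < A < A0 -> forall rho, 0 < rho < (1 + d0) / 2 ->
  is_derive (rA n f sinv A) rho (f rho ^ (n - 1) / f (rA n f sinv A rho) ^ (n - 1)).
Proof.
  intros HP HR HA rho Hrho. pose proof (jacobi_pos_regularity _ _ _ _ HP) as [_ [Hf _]]. pose proof HP as [_ [Hd0 Hpos]].
  pose proof (rA_continuous _ _ _ _ _ _ _ _ HP HR HA rho Hrho) as Hc. unfold rA_spec in HR.
  set (k := (n - 1)%nat) in *. set (b1 := (1 + d0) / 2) in *. assert (Hb1 : 1 < b1 < d0) by (unfold b1; lra).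
  destruct (HR A HA rho ltac:(lra)) as [Hr1 [Hr2 Hr3]].
  assert (Hfr : 0 < f (rA n f sinv A rho)) by (apply Hpos; lra).
  replace (f rho ^ k / f (rA n f sinv A rho) ^ k) with (ext0 f rho ^ k / ext0 f (rA n f sinv A rho) ^ k)
    by (unfold ext0; rewrite !Rmax_right by lra; auto).
  apply derive_inverse with (S := sigma0 f k); auto.
  - apply sigma0_derive; auto.
  - unfold ext0; rewrite Rmax_right by lra. apply pow_nonzero; lra.
  - exists (Rmin rho (b1 - rho)). split. apply Rmin_pos; lra.
    intros y Hne Hy. pose proof (Rmin_l rho (b1 - rho)). pose proof (Rmin_r rho (b1 - rho)).
    apply Rabs_def2 in Hy.
    destruct (HR A HA y ltac:(lra)) as [_ [_ Hy3]]. fold k in Hy3, Hr3. rewrite Hy3, Hr3.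
    destruct (Rlt_dec y rho).
    + pose proof (sigma0_strict kappa f f1 d0 k y rho HP ltac:(lra) ltac:(lra) ltac:(lra)). lra.
    + assert (rho < y) by (destruct (Rtotal_order y rho) as [?|[?|?]]; [lra|congruence|lra]).
      pose proof (sigma0_strict kappa f f1 d0 k rho y HP ltac:(lra) ltac:(lra) ltac:(lra)). lra.
  - apply is_derive_ext_loc with (fun y => sigma0 f k y + sigma0 f k A).
    + exists (mkposreal (Rmin rho (b1 - rho)) ltac:(apply Rmin_pos; lra)). intros y Hy.
      pose proof (Rmin_l rho (b1 - rho)). pose proof (Rmin_r rho (b1 - rho)).
      unfold ball in Hy; simpl in Hy; unfold AbsRing_ball in Hy; simpl in Hy. unfold abs, minus, plus, opp in Hy; simpl in Hy.
      apply Rabs_def2 in Hy.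
      destruct (HR A HA y ltac:(lra)) as [_ [_ Hy3]]. fold k in Hy3. auto.
    + eapply der_eq_val. apply der_add; [apply sigma0_derive; auto|apply der_const]. ring.
Qed.

(** The derivative of Phihat *)

Fixpoint sumk (k : nat) (F : nat -> R) : R :=
  match k with O => 0 | S k' => sumk k' F + F k' end.

Lemma cont_sumk (G : R -> nat -> R) k v : (forall i, (i < k)%nat -> continuity_pt (fun w => G w i) v) ->
  continuity_pt (fun w => sumk k (G w)) v.
Proof.
  induction k; intros H; simpl. apply cont_const. apply cont_add. apply IHk; intros; apply H; lia. apply H; lia.
Qed.

Lemma upd_same x i t : upd x i t i = t.
Proof. unfold upd. rewrite Nat.eqb_refl. auto. Qed.

Lemma upd_upd x i t s : upd (upd x i t) i s = upd x i s.
Proof. apply functional_extensionality. intros j. unfold upd. destruct (Nat.eqb j i); auto. Qed.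

Lemma uniform_delta (n : nat) (P : nat -> R -> Prop) :
  (forall j, (j < n)%nat -> exists d, 0 < d /\ forall h, Rabs h < d -> P j h) ->
  exists d, 0 < d /\ forall j h, (j < n)%nat -> Rabs h < d -> P j h.
Proof.
  induction n; intros H.
  - exists 1; split; [lra|]. intros; lia.
  - destruct IHn as [d1 [Hd1 Hd1']]. intros j Hj; apply H; lia.
    destruct (H n ltac:(lia)) as [d2 [Hd2 Hd2']].
    exists (Rmin d1 d2); split; [apply Rmin_pos; auto|]. intros j h Hj Hh.
    pose proof (Rmin_l d1 d2); pose proof (Rmin_r d1 d2).
    destruct (Nat.eq_dec j n) as [->|Hne]; [apply Hd2'; lra|apply Hd1'; [lia|lra]].
Qed.

Lemma coords_uniformly_close n (x : R -> nat -> R) v :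
  (forall j, (j < n)%nat -> continuity_pt (fun w => x w j) v) ->
  forall eta, 0 < eta -> exists dc, 0 < dc /\
    forall j h, (j < n)%nat -> Rabs h < dc -> Rabs (x (v + h) j - x v j) < eta.
Proof.
  intros Hc eta Heta. apply (uniform_delta n (fun j h => Rabs (x (v + h) j - x v j) < eta)).
  intros j Hj. destruct (Hc j Hj eta Heta) as [a [Ha Ha']]. exists a; split; auto. intros h Hh.
  destruct (Req_dec h 0) as [->|Hne]; [rewrite Rplus_0_r, Rminus_diag, Rabs_R0; auto|].
  apply (Ha' (v + h)). split; [split; [exact I|intro; apply Hne; lra]|].
  simpl; unfold R_dist. replace (v + h - v) with h by ring; auto.
Qed.

Definition C1D (n : nat) (Phi : (nat -> R) -> R) (D : nat -> (nat -> R) -> R) :=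
  forall i x, (i < n)%nat -> pos_vec n x ->
      derivable_pt_lim (fun t => Phi (upd x i t)) (x i) (D i x) /\
      (forall eps, 0 < eps -> exists eta, 0 < eta /\
         forall y, pos_vec n y ->
           (forall j, (j < n)%nat -> Rabs (y j - x j) < eta) ->
           Rabs (D i y - D i x) < eps).

Lemma partial_continuous_along n Phi D (x : R -> nat -> R) v i : C1D n Phi D -> (i < n)%nat ->
  (forall j, (j < n)%nat -> continuity_pt (fun w => x w j) v) ->
  (exists d, 0 < d /\ forall w, Rabs (w - v) < d -> pos_vec n (x w)) ->
  continuity_pt (fun w => D i (x w)) v.
Proof.
  intros HC Hi Hx [d [Hd Hpos]] eps Heps.
  assert (Hpv : pos_vec n (x v)) by (apply Hpos; rewrite Rminus_diag, Rabs_R0; auto).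
  destruct (proj2 (HC i (x v) Hi Hpv) eps Heps) as [eta [Heta Heta']].
  destruct (coords_uniformly_close n x v Hx eta Heta) as [dc [Hdc Hdc']].
  exists (Rmin dc d); split; [apply Rmin_pos; auto|]. intros w [_ Hw]. simpl in *. unfold R_dist in *.
  pose proof (Rmin_l dc d); pose proof (Rmin_r dc d).
  apply Heta'; [apply Hpos; lra|].
  intros j Hj. specialize (Hdc' j (w - v) Hj ltac:(lra)). replace (v + (w - v)) with w in Hdc' by ring. auto.
Qed.

Lemma partial_mvt n Phi D z k a b : C1D n Phi D -> (k < n)%nat -> pos_vec n z -> 0 < a -> 0 < b ->
  exists xi, Rmin a b <= xi <= Rmax a b /\
    Phi (upd z k b) - Phi (upd z k a) = D k (upd z k xi) * (b - a).
Proof.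
  intros HC Hk Hz Ha Hb.
  assert (Hposu : forall t, 0 < t -> pos_vec n (upd z k t))
    by (intros t Ht j Hj; unfold upd; destruct (Nat.eqb j k); auto).
  assert (Hgd : forall t, 0 < t -> is_derive (fun s => Phi (upd z k s)) t (D k (upd z k t))).
  { intros t Ht. destruct (HC k (upd z k t) Hk (Hposu t Ht)) as [Hd _].
    assert (E : (fun s => Phi (upd (upd z k t) k s)) = (fun s => Phi (upd z k s)))
      by (apply functional_extensionality; intros s; rewrite upd_upd; reflexivity).
    rewrite upd_same, E in Hd. apply is_derive_Reals. exact Hd. }
  assert (Hmin : 0 < Rmin a b) by (apply Rmin_pos; auto).
  apply (MVT_gen (fun s => Phi (upd z k s)) a b (fun t => D k (upd z k t))).
  - intros t Ht. apply Hgd. lra.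
  - intros t Ht. eapply cont_of_der. apply Hgd. lra.
Qed.

Lemma product_estimate a b A B eps : 0 < eps ->
  Rabs (a - A) < eps / (2 * (Rabs B + 1)) -> Rabs (b - B) < Rmin 1 (eps / (2 * (Rabs A + 1))) ->
  Rabs (a * b - A * B) < eps.
Proof.
  intros He Ha Hb. pose proof (Rmin_l 1 (eps / (2 * (Rabs A + 1)))) as H1.
  pose proof (Rmin_r 1 (eps / (2 * (Rabs A + 1)))) as H2.
  pose proof (Rabs_pos A); pose proof (Rabs_pos B).
  replace (a * b - A * B) with ((a - A) * b + A * (b - B)) by ring.
  eapply Rle_lt_trans; [apply Rabs_triang|]. rewrite !Rabs_mult.
  assert (Hb' : Rabs b <= Rabs B + 1).
  { replace b with ((b - B) + B) by ring. eapply Rle_trans; [apply Rabs_triang|]. lra. }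
  assert (E1 : Rabs (a - A) * Rabs b <= eps / (2 * (Rabs B + 1)) * (Rabs B + 1)).
  { apply Rmult_le_compat; try apply Rabs_pos; lra. }
  assert (E2 : Rabs A * Rabs (b - B) <= (Rabs A + 1) * (eps / (2 * (Rabs A + 1)))).
  { apply Rmult_le_compat; try apply Rabs_pos; lra. }
  assert (E3 : Rabs (a - A) * Rabs b < eps / (2 * (Rabs B + 1)) * (Rabs B + 1) \/
               Rabs A * Rabs (b - B) < (Rabs A + 1) * (eps / (2 * (Rabs A + 1)))).
  { left. destruct (Rle_lt_or_eq_dec 0 (Rabs b) (Rabs_pos b)) as [Hbp|e0].
    apply Rlt_le_trans with (eps / (2 * (Rabs B + 1)) * Rabs b). apply Rmult_lt_compat_r; auto.
    apply Rmult_le_compat_l; [left; apply Rdiv_lt_0_compat; lra|auto]. rewrite <- e0, Rmult_0_r. apply Rmult_lt_0_compat; [|lra].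
    apply Rdiv_lt_0_compat; lra. }
  replace (eps / (2 * (Rabs B + 1)) * (Rabs B + 1)) with (eps / 2) in * by (field; lra).
  replace ((Rabs A + 1) * (eps / (2 * (Rabs A + 1)))) with (eps / 2) in * by (field; lra).
  lra.
Qed.

(* The vector whose first k coordinates are those of x (v + h) and the others those of x v:
   it interpolates coordinate by coordinate between x v and x (v + h). *)
Definition mix (x : R -> nat -> R) (v : R) (k : nat) (h : R) : nat -> R :=
  fun j => if Nat.ltb j k then x (v + h) j else x v j.

Lemma mix_upd n Phi x v k h : depends_on_first n Phi ->
  Phi (mix x v k h) = Phi (upd (mix x v k h) k (x v k)) /\
  Phi (mix x v (S k) h) = Phi (upd (mix x v k h) k (x (v + h) k)).
Proof.
  intros Hdep. split; apply Hdep; intros j Hj; unfold upd, mix; destruct (Nat.eqb j k) eqn:E; auto.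
  - apply Nat.eqb_eq in E; subst j. rewrite Nat.ltb_irrefl. auto.
  - apply Nat.eqb_eq in E; subst j. replace (Nat.ltb k (S k)) with true; auto. symmetry; apply Nat.ltb_lt; lia.
  - apply Nat.eqb_neq in E. destruct (Nat.ltb j k) eqn:E2.
    + apply Nat.ltb_lt in E2. replace (Nat.ltb j (S k)) with true; auto. symmetry; apply Nat.ltb_lt; lia.
    + apply Nat.ltb_ge in E2. replace (Nat.ltb j (S k)) with false; auto. symmetry; apply Nat.ltb_ge; lia.
Qed.

Lemma chain_rule_step n Phi D (x : R -> nat -> R) (xd : nat -> R) (v d0 : R) (k : nat) :
  depends_on_first n Phi -> C1D n Phi D -> (k < n)%nat -> 0 < d0 ->
  (forall i, (i < n)%nat -> is_derive (fun w => x w i) v (xd i)) ->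
  (forall w, Rabs (w - v) < d0 -> pos_vec n (x w)) ->
  is_lim (fun h => (Phi (mix x v (S k) h) - Phi (mix x v k h)) / h) 0 (D k (x v) * xd k).
Proof.
  intros Hdep HC Hk Hd0 Hx Hpos.
  assert (Hpv : pos_vec n (x v)) by (apply Hpos; rewrite Rminus_diag, Rabs_R0; auto).
  apply is_lim_spec. intros eps. pose proof (cond_pos eps) as Heps.
  set (A := D k (x v)). set (B := xd k).
  set (e1 := eps / (2 * (Rabs B + 1))). set (e2 := Rmin 1 (eps / (2 * (Rabs A + 1)))).
  assert (He1 : 0 < e1) by (unfold e1; apply Rdiv_lt_0_compat; [lra|pose proof (Rabs_pos B); lra]).
  assert (He2 : 0 < e2) by (unfold e2; apply Rmin_pos; [lra|apply Rdiv_lt_0_compat; [lra|pose proof (Rabs_pos A); lra]]).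
  pose proof (quotient_limit_of_derive _ _ _ (Hx k Hk)) as Hb. apply is_lim_spec in Hb.
  destruct (Hb (mkposreal e2 He2)) as [db Hdb].
  destruct (proj2 (HC k (x v) Hk Hpv) e1 He1) as [eta [Heta Heta']].
  destruct (coords_uniformly_close n x v (fun j Hj => cont_of_der _ _ _ (Hx j Hj)) eta Heta) as [dc [Hdc Hdc']].
  set (dd := Rmin (Rmin db dc) d0).
  assert (Hdd : 0 < dd) by (unfold dd; repeat apply Rmin_pos; auto; apply cond_pos).
  exists (mkposreal dd Hdd). intros h Hh Hh0. apply ball0_1 in Hh. simpl in Hh. change R in h.
  pose proof (Rmin_l (Rmin db dc) d0); pose proof (Rmin_r (Rmin db dc) d0).
  pose proof (Rmin_l db dc); pose proof (Rmin_r db dc).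
  assert (Hpvh : pos_vec n (x (v + h))) by (apply Hpos; replace (v + h - v) with h by ring; unfold dd in Hh; lra).
  set (a := x v k). set (b := x (v + h) k).
  assert (Hmix : pos_vec n (mix x v k h))
    by (intros j Hj; unfold mix; destruct (Nat.ltb j k); [apply Hpvh|apply Hpv]; auto).
  destruct (partial_mvt n Phi D (mix x v k h) k a b HC Hk Hmix ltac:(apply Hpv; lia) ltac:(apply Hpvh; lia))
    as [xi [Hxi Hxi']].
  destruct (mix_upd n Phi x v k h Hdep) as [HgA HgB].
  rewrite HgB, HgA. fold a b. rewrite Hxi'.
  assert (Hxi0 : 0 < xi) by (pose proof (Rmin_glb_lt a b 0 ltac:(apply Hpv; lia) ltac:(apply Hpvh; lia)); lra).
  assert (Hz : Rabs (D k (upd (mix x v k h) k xi) - A) < e1).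
  { apply Heta'; [intros j Hj; unfold upd; destruct (Nat.eqb j k); auto|].
    intros j Hj. unfold upd, mix. destruct (Nat.eqb j k) eqn:E.
    - apply Nat.eqb_eq in E; subst j. specialize (Hdc' k h Hj ltac:(unfold dd in Hh; lra)). fold a b in Hdc' |- *.
      destruct (Rle_dec a b); [rewrite Rmin_left, Rmax_right in Hxi by lra|rewrite Rmin_right, Rmax_left in Hxi by lra];
      apply Rabs_def2 in Hdc'; apply Rabs_def1; lra.
    - destruct (Nat.ltb j k); [apply Hdc'; auto; unfold dd in Hh; lra|rewrite Rminus_diag, Rabs_R0; auto]. }
  assert (Hq : Rabs ((b - a) / h - B) < e2).
  { apply (Hdb h); auto. apply ball0_2. unfold dd in Hh; lra. }
  replace (D k (upd (mix x v k h) k xi) * (b - a) / h) with (D k (upd (mix x v k h) k xi) * ((b - a) / h)) by (field; auto).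
  apply product_estimate; auto.
Qed.

(* Chain rule for Phi along a differentiable path with positive coordinates, by telescoping
   over the coordinates. *)
Lemma chain_rule (n : nat) Phi D (x : R -> nat -> R) (xd : nat -> R) (v : R) :
  depends_on_first n Phi -> C1D n Phi D ->
  (forall i, (i < n)%nat -> is_derive (fun w => x w i) v (xd i)) ->
  (exists d, 0 < d /\ forall w, Rabs (w - v) < d -> pos_vec n (x w)) ->
  is_derive (fun w => Phi (x w)) v (sumk n (fun i => D i (x v) * xd i)).
Proof.
  intros Hdep HC Hx [d0 [Hd0 Hpos]].
  assert (Hclaim : forall k, (k <= n)%nat ->
    is_lim (fun h => (Phi (mix x v k h) - Phi (x v)) / h) 0 (sumk k (fun i => D i (x v) * xd i))).
  { induction k; intros Hk.
    - apply is_lim_ext with (fun _ => 0); [|apply is_lim_const].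
      intros h. unfold mix. simpl. unfold Rminus. rewrite Rplus_opp_r. unfold Rdiv; ring.
    - eapply is_lim_ext_loc;
        [|apply (is_lim_plus' _ _ 0 _ _ (IHk ltac:(lia)) (chain_rule_step n Phi D x xd v d0 k Hdep HC ltac:(lia) Hd0 Hx Hpos))].
      exists (mkposreal 1 Rlt_0_1). intros h _ Hh0. simpl. field. auto. }
  apply derive_of_quotient_limit. eapply is_lim_ext; [|apply (Hclaim n (le_n n))].
  intros h. simpl. f_equal. f_equal. apply Hdep. intros j Hj. unfold mix. replace (Nat.ltb j n) with true; auto.
  symmetry; apply Nat.ltb_lt; auto.
Qed.

Definition xpath (n : nat) (v : R) : nat -> R := fun i => if Nat.eqb i 0 then / v ^ (n - 1) else v.

Definition xd (n : nat) (v : R) (i : nat) : R :=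
  if Nat.eqb i 0 then - (INR (n - 1) * 1 * v ^ Nat.pred (n - 1)) / (v ^ (n - 1)) ^ 2 else 1.

Lemma xpath_der n v i : 0 < v -> is_derive (fun w => xpath n w i) v (xd n v i).
Proof.
  intros Hv. unfold xpath, xd. destruct (Nat.eqb i 0).
  - apply (is_derive_inv (fun w => w ^ (n - 1))). apply is_derive_pow. apply der_id.
    apply pow_nonzero; lra.
  - apply der_id.
Qed.

Lemma xpath_pos n w : 0 < w -> pos_vec n (xpath n w).
Proof. intros Hw i _. unfold xpath. destruct (Nat.eqb i 0); auto. apply Rinv_0_lt_compat, pow_lt; auto. Qed.

Lemma dPhi_formula n Phi D dPhi : depends_on_first n Phi -> C1D n Phi D ->
  (forall v, 0 < v -> derivable_pt_lim (Phihat n Phi) v (dPhi v)) ->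
  forall v, 0 < v -> dPhi v = sumk n (fun i => D i (xpath n v) * xd n v i).
Proof.
  intros Hdep HC HdP v Hv. assert (H1 := HdP v Hv). apply is_derive_Reals in H1.
  assert (H2 : is_derive (fun w => Phi (xpath n w)) v (sumk n (fun i => D i (xpath n v) * xd n v i))).
  { apply chain_rule; auto. intros i _; apply xpath_der; auto.
    exists v; split; auto. intros w Hw. apply Rabs_def2 in Hw. apply xpath_pos; lra. }
  apply is_derive_unique in H1. apply is_derive_unique in H2. unfold Phihat in H1. fold (xpath n) in H1.
  rewrite <- H1, <- H2. reflexivity.
Qed.

(* Phihat' is continuous on (0, +oo), as a sum of continuous partial derivatives along xpath. *)
Lemma dPhi_continuous n Phi D dPhi : depends_on_first n Phi -> C1D n Phi D ->
  (forall v, 0 < v -> derivable_pt_lim (Phihat n Phi) v (dPhi v)) ->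
  forall v, 0 < v -> continuity_pt dPhi v.
Proof.
  intros Hdep HC HdP v Hv.
  apply cont_ext_loc with (fun w => sumk n (fun i => D i (xpath n w) * xd n w i)) v; auto.
  - apply cont_sumk. intros i Hi. apply cont_mul.
    + apply (partial_continuous_along n Phi D (xpath n) v i HC Hi).
      * intros j _. exact (cont_of_der _ _ _ (xpath_der n v j Hv)).
      * exists v; split; auto. intros w Hw. apply Rabs_def2 in Hw. apply xpath_pos; lra.
    + unfold xd. destruct (Nat.eqb i 0); [|apply cont_const].
      apply cont_div; [|apply cont_pow, cont_pow, cont_id|apply pow_nonzero, pow_nonzero; lra].
      apply cont_ext with (fun t => 0 - (INR (n-1) * 1 * t ^ Nat.pred (n-1))); [|intros; ring].
      apply cont_sub; [apply cont_const|]. apply cont_mul; [apply cont_const|apply cont_pow, cont_id].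
  - intros t Ht. apply Rabs_def2 in Ht. rewrite (dPhi_formula n Phi D dPhi) by (auto; lra). auto.
Qed.

Lemma partials_equal_at_one n Phi D : symmetric_on_pos n Phi -> C1D n Phi D ->
  forall i, (0 < i < n)%nat -> D i (fun _ => 1) = D 0%nat (fun _ => 1).
Proof.
  intros Hsym HC i Hi. set (one := fun _ : nat => 1).
  assert (Hone : pos_vec n one) by (intros j _; unfold one; lra).
  (* the transposition of 0 and i *)
  set (p := fun j => if Nat.eqb j 0 then i else if Nat.eqb j i then 0%nat else j).
  assert (Heq : forall t, 0 < t -> Phi (upd one i t) = Phi (upd one 0 t)).
  { intros t Ht. rewrite <- (Hsym p (upd one 0 t)).
    - f_equal. apply functional_extensionality. intros j. unfold p, upd, one.
      destruct (Nat.eqb j 0) eqn:E1; destruct (Nat.eqb j i) eqn:E2; destruct (Nat.eqb i 0) eqn:E3; simpl;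
      try rewrite E1; try rewrite E3; try reflexivity;
      repeat match goal with H : Nat.eqb _ _ = true |- _ => apply Nat.eqb_eq in H | H : Nat.eqb _ _ = false |- _ => apply Nat.eqb_neq in H end; try lia.
    - intros j Hj. unfold p. destruct (Nat.eqb j 0); [lia|]. destruct (Nat.eqb j i); lia.
    - intros j1 j2 Hj1 Hj2. unfold p.
      destruct (Nat.eqb j1 0) eqn:E1; destruct (Nat.eqb j1 i) eqn:E2;
      destruct (Nat.eqb j2 0) eqn:E3; destruct (Nat.eqb j2 i) eqn:E4;
      repeat match goal with H : Nat.eqb _ _ = true |- _ => apply Nat.eqb_eq in H | H : Nat.eqb _ _ = false |- _ => apply Nat.eqb_neq in H end; lia.
    - intros j Hj. unfold upd, one. destruct (Nat.eqb j 0); lra. }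
  destruct (HC i one ltac:(lia) Hone) as [Hi1 _]. destruct (HC 0%nat one ltac:(lia) Hone) as [H01 _].
  apply is_derive_Reals in Hi1. apply is_derive_Reals in H01. unfold one in Hi1, H01 at 2.
  assert (Hi2 : is_derive (fun t => Phi (upd one 0 t)) 1 (D i one)).
  { apply is_derive_ext_loc with (fun t => Phi (upd one i t)); auto.
    exists (mkposreal 1 Rlt_0_1). intros t Ht. unfold ball in Ht; simpl in Ht; unfold AbsRing_ball in Ht; simpl in Ht.
    unfold abs, minus, plus, opp in Ht; simpl in Ht. apply Rabs_def2 in Ht. apply Heq. lra. }
  apply is_derive_unique in Hi2. apply is_derive_unique in H01. rewrite <- Hi2, <- H01. auto.
Qed.

(* Phihat'(1) = D_0 Phi (1,...,1) (1 - n) + (n - 1) D_0 Phi (1,...,1) = 0. *)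
Lemma dPhi_at_1 n Phi D dPhi : (2 <= n)%nat -> depends_on_first n Phi -> symmetric_on_pos n Phi ->
  C1D n Phi D -> (forall v, 0 < v -> derivable_pt_lim (Phihat n Phi) v (dPhi v)) -> dPhi 1 = 0.
Proof.
  intros Hn Hdep Hsym HC HdP. rewrite (dPhi_formula n Phi D dPhi) by (auto; lra).
  assert (Hx1 : xpath n 1 = fun _ => 1).
  { apply functional_extensionality; intros i; unfold xpath. destruct (Nat.eqb i 0); auto. rewrite pow1, Rinv_1; auto. }
  rewrite Hx1.
  assert (Hsum : forall k, (1 <= k <= n)%nat ->
    sumk k (fun i => D i (fun _ => 1) * xd n 1 i) = D 0%nat (fun _ => 1) * (INR k - 1 - INR (n - 1))).
  { induction k; intros Hk; [lia|]. destruct (Nat.eq_dec k 0) as [->|Hk0].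
    - simpl. unfold xd. simpl. rewrite !pow1. field.
    - simpl sumk. rewrite IHk by lia. unfold xd. replace (Nat.eqb k 0) with false by (symmetry; apply Nat.eqb_neq; auto).
      rewrite (partials_equal_at_one n Phi D Hsym HC k) by lia. rewrite S_INR. ring. }
  rewrite Hsum by lia. replace n with (S (n - 1)) at 1 by lia. rewrite S_INR. ring.
Qed.

(** The critical integral P_cr = int_1^oo Phihat'(t) / (t^n - 1) dt *)

Definition gfun (n : nat) (dPhi : R -> R) (t : R) := dPhi t / (t ^ n - 1).

Lemma pow_ge_x (t : R) (n : nat) : (1 <= n)%nat -> 1 <= t -> t <= t ^ n.
Proof.
  intros Hn Ht. destruct n; [lia|]. simpl. rewrite <- (Rmult_1_r t) at 1.
  apply Rmult_le_compat_l; [lra|]. apply pow_R1_Rle; auto.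
Qed.

Section CriticalIntegral.

Variables (n : nat) (dPhi : R -> R).
Hypothesis Hn : (1 <= n)%nat.
Hypothesis HdC : forall v, 0 < v -> continuity_pt dPhi v.

Let g := gfun n dPhi.

Lemma gfun_continuous : forall t, 1 < t -> continuity_pt g t.
Proof.
  intros t Ht. unfold g, gfun. apply cont_div; [apply HdC; lra|apply cont_sub; [apply cont_pow, cont_id|apply cont_const]|].
  pose proof (pow_ge_x t n Hn ltac:(lra)). lra.
Qed.

Lemma ex_RInt_gfun a b : 1 < a -> 1 < b -> ex_RInt g a b.
Proof.
  intros Ha Hb. apply ex_RInt_between. intros z Hz. apply gfun_continuous. pose proof (Rmin_glb_lt a b 1). lra.
Qed.

Lemma ex_RInt_abs_gfun a b : 1 < a -> 1 < b -> ex_RInt (fun t => Rabs (g t)) a b.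
Proof.
  intros Ha Hb. apply ex_RInt_between. intros z Hz. apply cont_abs, gfun_continuous.
  pose proof (Rmin_glb_lt a b 1). lra.
Qed.

(* Since Phihat'(1) = 0 and Phihat' is differentiable at 1, g is bounded on (1, 2]. *)
Lemma gfun_bounded_near_1 : dPhi 1 = 0 -> (exists l, derivable_pt_lim dPhi 1 l) ->
  exists Cg, 0 < Cg /\ forall t, 1 < t <= 2 -> Rabs (g t) <= Cg.
Proof.
  intros Hd1 [l Hl].
  destruct (Hl 1 Rlt_0_1) as [dl Hdl].
  set (d1 := Rmin dl 1).
  assert (Hd1p : 0 < d1) by (unfold d1; apply Rmin_pos; [apply cond_pos|lra]).
  assert (Hd1le : d1 <= 1) by (unfold d1; apply Rmin_r).
  (* near 1: |g t| <= |Phihat'(t)/(t - 1)| <= |l| + 1 *)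
  assert (Hnear : forall t, 1 < t < 1 + d1 -> Rabs (g t) <= Rabs l + 1).
  { intros t Ht. specialize (Hdl (t - 1)). replace (1 + (t - 1)) with t in Hdl by ring. rewrite Hd1, Rminus_0_r in Hdl.
    assert (Hq : Rabs (dPhi t / (t - 1) - l) < 1).
    { apply Hdl. lra. rewrite Rabs_right by lra. pose proof (Rmin_l dl 1). unfold d1 in Ht. lra. }
    assert (Hq2 : Rabs (dPhi t / (t - 1)) <= Rabs l + 1).
    { replace (dPhi t / (t - 1)) with ((dPhi t / (t - 1) - l) + l) by ring.
      eapply Rle_trans; [apply Rabs_triang|]. lra. }
    unfold g, gfun. pose proof (pow_ge_x t n Hn ltac:(lra)).
    replace (dPhi t / (t ^ n - 1)) with (dPhi t / (t - 1) * ((t - 1) / (t ^ n - 1))) by (field; lra).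
    rewrite Rabs_mult. rewrite (Rabs_right ((t - 1) / (t ^ n - 1))).
    2: { apply Rle_ge; apply Rdiv_le_0_compat; lra. }
    assert ((t - 1) / (t ^ n - 1) <= 1).
    { apply Rmult_le_reg_r with (t ^ n - 1); [lra|]. unfold Rdiv; rewrite Rmult_assoc, Rinv_l by lra. lra. }
    assert (0 <= (t - 1) / (t ^ n - 1)) by (apply Rdiv_le_0_compat; lra).
    pose proof (Rabs_pos (dPhi t / (t - 1))). nra. }
  destruct (bounded_on_segment g (1 + d1 / 2) 2 ltac:(lra) ltac:(intros x Hx; apply gfun_continuous; lra))
    as [M2 [HM2 HM2']].
  exists (Rabs l + 1 + M2). split; [pose proof (Rabs_pos l); lra|].
  intros t Ht. pose proof (Rabs_pos l). destruct (Rlt_dec t (1 + d1)).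
  - pose proof (Hnear t ltac:(lra)). lra.
  - pose proof (HM2' t ltac:(lra)). lra.
Qed.

Lemma gfun_abs_integral_bounded Cg : 0 < Cg -> (forall t, 1 < t <= 2 -> Rabs (g t) <= Cg) ->
  (forall delta, 1 < delta -> exists B, forall M, delta <= M ->
     inhabited (Riemann_integrable (fun v => Rabs (dPhi v / (v ^ n - 1))) delta M) /\
     Defs.RInt (fun v => Rabs (dPhi v / (v ^ n - 1))) delta M <= B) ->
  exists Lg, 0 < Lg /\ forall x y, 1 < x -> x <= y -> RInt (fun t => Rabs (g t)) x y <= Lg.
Proof.
  intros HCg Hbnd HL1.
  destruct (HL1 2 ltac:(lra)) as [B2 HB2].
  assert (HB2' : forall M, 2 <= M -> RInt (fun t => Rabs (g t)) 2 M <= B2).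
  { intros M HM. destruct (HB2 M HM) as [_ HB].
    rewrite (proj2 (Defs_RInt_correct (fun v => Rabs (dPhi v / (v ^ n - 1))) 2 M (ex_RInt_abs_gfun 2 M ltac:(lra) ltac:(lra)))) in HB.
    exact HB. }
  assert (HB2pos : 0 <= B2) by (specialize (HB2' 2 (Rle_refl 2)); rewrite RInt_point_R in HB2'; auto).
  assert (Hint01 : forall x y, 1 < x -> x <= y -> y <= 2 -> RInt (fun t => Rabs (g t)) x y <= Cg * (y - x)).
  { intros x y Hx Hxy Hy. rewrite Rmult_comm, <- RInt_const_R.
    apply RInt_le; [lra|apply ex_RInt_abs_gfun; lra|apply ex_RInt_between; intros z Hz; apply cont_const|].
    intros t Ht. apply Hbnd; lra. }
  exists (Cg + B2). split; [lra|]. intros x y Hx Hxy.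
  assert (Hnn : forall a b, 1 < a -> a <= b -> 0 <= RInt (fun t => Rabs (g t)) a b).
  { intros a b Ha Hab. apply RInt_ge_0; [lra|apply ex_RInt_abs_gfun; lra|intros t _; apply Rabs_pos]. }
  destruct (Rle_dec y 2) as [Hy2|Hy2].
  - pose proof (Hint01 x y Hx Hxy Hy2). nra.
  - destruct (Rle_dec 2 x) as [r0|r0].
    + pose proof (RInt_Chasles_R (fun t => Rabs (g t)) 2 x y (ex_RInt_abs_gfun 2 x ltac:(lra) ltac:(lra)) (ex_RInt_abs_gfun x y ltac:(lra) ltac:(lra))).
      pose proof (HB2' y ltac:(lra)). pose proof (Hnn 2 x ltac:(lra) r0). lra.
    + pose proof (RInt_Chasles_R (fun t => Rabs (g t)) x 2 y (ex_RInt_abs_gfun x 2 ltac:(lra) ltac:(lra)) (ex_RInt_abs_gfun 2 y ltac:(lra) ltac:(lra))).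
      pose proof (HB2' y ltac:(lra)). pose proof (Hint01 x 2 Hx ltac:(lra) ltac:(lra)). nra.
Qed.

Lemma RInt_gfun_from_2 x y : 1 < x -> 1 < y -> RInt g 2 y - RInt g 2 x = RInt g x y.
Proof.
  intros Hx Hy. pose proof (RInt_Chasles_R g 2 x y (ex_RInt_gfun 2 x ltac:(lra) Hx) (ex_RInt_gfun x y Hx Hy)). lra.
Qed.

Lemma gfun_limit_at_infinity Lg : (forall x y, 1 < x -> x <= y -> RInt (fun t => Rabs (g t)) x y <= Lg) ->
  exists Ginf, forall eps, 0 < eps -> exists M0, 2 <= M0 /\ forall M, M0 <= M -> Rabs (RInt g 2 M - Ginf) < eps.
Proof.
  intros HLg.
  apply (dominated_limit_at_infinity (fun x => RInt g 2 x) (fun x => RInt (fun t => Rabs (g t)) 2 x) 2 Lg).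
  - intros x y Hx Hxy. rewrite RInt_gfun_from_2 by lra.
    pose proof (RInt_Chasles_R (fun t => Rabs (g t)) 2 x y
                  (ex_RInt_abs_gfun 2 x ltac:(lra) ltac:(lra)) (ex_RInt_abs_gfun x y ltac:(lra) ltac:(lra))).
    eapply Rle_trans; [apply abs_RInt_le_R; [auto|apply ex_RInt_gfun; lra]|]. lra.
  - intros x Hx. apply HLg; lra.
Qed.

(* int_2^d g converges as d -> 1+, since g is bounded on (1, 2]. *)
Lemma gfun_limit_at_1 Cg : 0 < Cg -> (forall t, 1 < t <= 2 -> Rabs (g t) <= Cg) ->
  exists G1, forall eps, 0 < eps -> exists eta, 0 < eta /\ eta <= 1 /\ forall d, 1 < d < 1 + eta ->
       Rabs (RInt g 2 d - G1) < eps.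
Proof.
  intros HCg Hbnd.
  destruct (dominated_limit_at_0 (fun s => RInt g 2 (1 + s)) (fun s => - Cg * s) 1 0) as [G1 HG1]; [lra| | |].
  - intros x y Hx Hxy Hy. replace (RInt g 2 (1 + x) - RInt g 2 (1 + y)) with (- (RInt g 2 (1 + y) - RInt g 2 (1 + x))) by ring.
    rewrite Rabs_Ropp, RInt_gfun_from_2 by lra. eapply Rle_trans; [apply abs_RInt_le_R; [lra|apply ex_RInt_gfun; lra]|].
    rewrite <- (Rmult_1_l (RInt _ _ _)). apply Rle_trans with (RInt (fun _ => Cg) (1 + x) (1 + y)).
    + rewrite Rmult_1_l. apply RInt_le; [lra|apply ex_RInt_abs_gfun; lra|apply ex_RInt_between; intros; apply cont_const|].
      intros t Ht. apply Hbnd; lra.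
    + rewrite RInt_const_R. right; ring.
  - intros x Hx _. nra.
  - exists G1. intros eps Heps. destruct (HG1 eps Heps) as [eta [Heta [Heta1 Heta']]].
    exists eta; split; auto; split; auto.
    intros d Hd. specialize (Heta' (d - 1) ltac:(lra)). replace (1 + (d - 1)) with d in Heta' by ring. auto.
Qed.

Lemma critical_integral G1 Ginf :
  (forall eps, 0 < eps -> exists eta, 0 < eta /\ eta <= 1 /\ forall d, 1 < d < 1 + eta -> Rabs (RInt g 2 d - G1) < eps) ->
  (forall eps, 0 < eps -> exists M0, 2 <= M0 /\ forall M, M0 <= M -> Rabs (RInt g 2 M - Ginf) < eps) ->
  improper_1_inf (fun tau => dPhi tau / (tau ^ n - 1)) (Ginf - G1).
Proof.
  intros HG1 HGinf eps Heps.
  destruct (HG1 (eps/2) ltac:(lra)) as [eta [Heta [Heta1 Heta']]].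
  destruct (HGinf (eps/2) ltac:(lra)) as [M0 [HM0 HM0']].
  exists eta; split; auto. exists M0. intros d M Hd HM.
  destruct (Defs_RInt_correct (fun tau => dPhi tau / (tau ^ n - 1)) d M (ex_RInt_gfun d M ltac:(lra) ltac:(lra)))
    as [Hi ->]. split; auto.
  change (RInt (fun tau => dPhi tau / (tau ^ n - 1)) d M) with (RInt g d M).
  rewrite <- (RInt_gfun_from_2 d M) by lra.
  specialize (Heta' d Hd). specialize (HM0' M ltac:(lra)).
  apply Rabs_def2 in Heta'. apply Rabs_def2 in HM0'. apply Rabs_def1; lra.
Qed.

End CriticalIntegral.

(** Asymptotic substitution: the integral of chi near 0 *)

Lemma derive_primitive_from_2 (g : R -> R) : (forall t, 1 < t -> continuity_pt g t) ->
  forall x, 1 < x -> is_derive (fun y => RInt g 2 y) x (g x).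
Proof.
  intros Hg x Hx. apply is_derive_RInt with (a := 2).
  - exists (mkposreal (x - 1) ltac:(lra)). intros y Hy. apply RInt_correct.
    unfold ball in Hy; simpl in Hy; unfold AbsRing_ball in Hy; simpl in Hy. unfold abs, minus, plus, opp in Hy; simpl in Hy.
    apply Rabs_def2 in Hy. apply ex_RInt_between. intros z Hz. apply Hg. pose proof (Rmin_glb_lt 2 y 1). lra.
  - apply continuous_of_pt; auto.
Qed.

Lemma RInt_substitution (g T dT : R -> R) a b : a <= b ->
  (forall t, 1 < t -> continuity_pt g t) ->
  (forall x, a <= x <= b -> is_derive T x (dT x) /\ continuity_pt dT x /\ 1 < T x) ->
  ex_RInt (fun r => dT r * g (T r)) a b /\
  RInt (fun r => dT r * g (T r)) a b = RInt g 2 (T b) - RInt g 2 (T a).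
Proof.
  intros Hab Hg HT. apply (ftc (fun r => RInt g 2 (T r))); auto.
  - intros x Hx. apply (is_derive_comp (fun y => RInt g 2 y) T x); [|apply HT; auto].
    apply derive_primitive_from_2; auto. apply HT; auto.
  - intros x Hx. destruct (HT x Hx) as [HTd [HdTc HT1]]. apply cont_mul; auto.
    apply (cont_comp g T); [eapply cont_of_der; exact HTd|apply Hg; auto].
Qed.

Definition substitution_data (h T dT g : R -> R) (c eta K : R) : Prop :=
  forall rho, 0 < rho <= c -> continuity_pt h rho /\ is_derive T rho (dT rho) /\
     continuity_pt dT rho /\ 1 < T rho /\ dT rho < 0 /\ K / rho <= T rho /\
     Rabs (h rho + g (T rho) * dT rho) <= eta * (Rabs (g (T rho)) * (- dT rho)).

Section Substitution.

Variables (h T dT g : R -> R) (c eta Lg Ginf K : R).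
Hypothesis Hc : 0 < c.
Hypothesis He : 0 < eta.
Hypothesis HK : 0 < K.
Hypothesis H : substitution_data h T dT g c eta K.
Hypothesis Hg : forall t, 1 < t -> continuity_pt g t.
Hypothesis HLg : forall x y, 1 < x -> x <= y -> RInt (fun t => Rabs (g t)) x y <= Lg.
Hypothesis HGinf : forall eps, 0 < eps -> exists M0, 2 <= M0 /\ forall M, M0 <= M -> Rabs (RInt g 2 M - Ginf) < eps.

Let G y := RInt g 2 y.
Let Ga y := RInt (fun t => Rabs (g t)) 2 y.

Lemma substitution_ex_RInt e1 e2 : 0 < e1 -> e1 <= e2 -> e2 <= c -> ex_RInt h e1 e2.
Proof. intros H1 H2 H3. apply ex_RInt_segment; auto. intros x Hx; apply H; lra. Qed.

Lemma substitution_increment e1 e2 : 0 < e1 -> e1 <= e2 -> e2 <= c ->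
  Rabs (RInt h e1 e2 - (G (T e1) - G (T e2))) <= eta * (Ga (T e1) - Ga (T e2)).
Proof.
  intros H1 H2 H3.
  assert (HT : forall x, e1 <= x <= e2 -> is_derive T x (dT x) /\ continuity_pt dT x /\ 1 < T x)
    by (intros x Hx; destruct (H x ltac:(lra)) as [_ [? [? [? _]]]]; auto).
  destruct (RInt_substitution g T dT e1 e2 H2 Hg HT) as [FG1 FG2].
  destruct (RInt_substitution (fun t => Rabs (g t)) T dT e1 e2 H2 (fun t Ht => cont_abs _ _ (Hg t Ht)) HT)
    as [FK1 FK2].
  assert (Exh := substitution_ex_RInt e1 e2 H1 H2 H3).
  assert (Hsum : ex_RInt (fun r => h r + dT r * g (T r)) e1 e2) by (apply (ex_RInt_plus h); auto).
  replace (RInt h e1 e2 - (G (T e1) - G (T e2))) with (RInt (fun r => h r + dT r * g (T r)) e1 e2)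
    by (rewrite RInt_plus_R by auto; unfold G; lra).
  replace (eta * (Ga (T e1) - Ga (T e2))) with (RInt (fun r => (- eta) * (dT r * Rabs (g (T r)))) e1 e2)
    by (rewrite RInt_scal_R, FK2 by auto; unfold Ga; lra).
  eapply Rle_trans; [apply abs_RInt_le_R; auto|].
  apply RInt_le; auto.
  - apply ex_RInt_segment; auto. intros x Hx. destruct (H x ltac:(lra)) as [Hh [HTd [HdTc [HT1 _]]]].
    apply cont_abs, cont_add; auto. apply cont_mul; auto.
    apply (cont_comp g T); [eapply cont_of_der; exact HTd|apply Hg; auto].
  - apply (ex_RInt_scal (fun r => dT r * Rabs (g (T r)))); auto.
  - intros x Hx. destruct (H x ltac:(lra)) as [_ [_ [_ [_ [_ [_ Hb]]]]]].
    replace (h x + dT x * g (T x)) with (h x + g (T x) * dT x) by ring.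
    replace (- eta * (dT x * Rabs (g (T x)))) with (eta * (Rabs (g (T x)) * - dT x)) by ring. auto.
Qed.

Lemma Ga_bounded y : 1 < y -> Ga y <= Lg.
Proof.
  intros Hy. unfold Ga. destruct (Rle_dec 2 y); [apply HLg; lra|].
  assert (HLg0 : 0 <= Lg) by (pose proof (HLg 2 2 ltac:(lra) (Rle_refl 2)) as H0; rewrite RInt_point_R in H0; auto).
  assert (Hex2 : ex_RInt (fun t => Rabs (g t)) y 2)
    by (apply ex_RInt_segment; [lra|]; intros x Hx; apply cont_abs, Hg; lra).
  pose proof (RInt_Chasles_R (fun t => Rabs (g t)) 2 y 2 (ex_RInt_swap _ _ _ Hex2) Hex2) as Ch.
  rewrite RInt_point_R in Ch.
  assert (0 <= RInt (fun t => Rabs (g t)) y 2) by (apply RInt_ge_0; [lra|auto|intros; apply Rabs_pos]).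
  lra.
Qed.

Lemma substitution_T_nonincreasing e : 0 < e <= c -> T c <= T e.
Proof.
  intros He'. destruct (Req_dec e c) as [->|Hne]; [lra|].
  destruct (MVT_gen T e c dT) as [xi [Hxi Hxi']].
  - intros x Hx. rewrite Rmin_left, Rmax_right in Hx by lra. apply H; lra.
  - intros x Hx. rewrite Rmin_left, Rmax_right in Hx by lra. eapply cont_of_der. apply H; lra.
  - rewrite Rmin_left, Rmax_right in Hxi by lra. destruct (H xi ltac:(lra)) as [_ [_ [_ [_ [HTD _]]]]].
    assert (dT xi * (c - e) <= 0) by (apply Rmult_le_0_r; lra). lra.
Qed.

(* u(e) = int_e^c h - G(T e) varies less than eta Ga(T e), which is monotone and bounded. *)
Let u e := RInt h e c - G (T e).

Lemma substitution_variation x y : 0 < x -> x <= y -> y <= c ->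
  Rabs (u x - u y) <= eta * Ga (T x) - eta * Ga (T y).
Proof.
  intros Hx Hxy Hy. unfold u.
  pose proof (RInt_Chasles_R h x y c (substitution_ex_RInt x y Hx Hxy Hy) (substitution_ex_RInt y c ltac:(lra) Hy (Rle_refl c))).
  replace (RInt h x c - G (T x) - (RInt h y c - G (T y))) with (RInt h x y - (G (T x) - G (T y))) by lra.
  replace (eta * Ga (T x) - eta * Ga (T y)) with (eta * (Ga (T x) - Ga (T y))) by ring.
  apply substitution_increment; auto.
Qed.

Lemma substitution_limit : exists U, forall eps, 0 < eps -> exists del, 0 < del /\ del <= c /\
  forall x, 0 < x < del -> Rabs (u x - U) < eps.
Proof.
  apply (dominated_limit_at_0 u (fun e => eta * Ga (T e)) c (eta * Lg) Hc substitution_variation).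
  intros x Hx Hxc. apply Rmult_le_compat_l; [lra|]. apply Ga_bounded, H; lra.
Qed.

Lemma substitution_variation_bound e : 0 < e <= c -> Rabs (u e - u c) <= eta * Lg.
Proof.
  intros He'. eapply Rle_trans; [apply substitution_variation; lra|].
  replace (eta * Ga (T e) - eta * Ga (T c)) with (eta * (Ga (T e) - Ga (T c))) by ring.
  apply Rmult_le_compat_l; [lra|].
  destruct (H c ltac:(lra)) as [_ [_ [_ [HT1 _]]]]. pose proof (substitution_T_nonincreasing e He').
  unfold Ga. rewrite <- (RInt_Chasles_R (fun t => Rabs (g t)) 2 (T c) (T e)).
  - pose proof (HLg (T c) (T e) ltac:(lra) ltac:(lra)) as HL'. lra.
  - apply ex_RInt_between. intros z Hz. apply cont_abs, Hg. pose proof (Rmin_glb_lt 2 (T c) 1). lra.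
  - apply ex_RInt_between. intros z Hz. apply cont_abs, Hg. pose proof (Rmin_glb_lt (T c) (T e) 1). lra.
Qed.

Lemma change_of_variable_estimate :
  exists L1, (forall eps, 0 < eps -> exists del, 0 < del /\ del <= c /\ forall e, 0 < e < del ->
       ex_RInt h e c /\ Rabs (RInt h e c - L1) < eps) /\
     Rabs (L1 - (Ginf - RInt g 2 (T c))) <= eta * Lg.
Proof.
  destruct substitution_limit as [U HU]. exists (U + Ginf). split.
  - (* T e -> +oo as e -> 0, so G(T e) -> Ginf *)
    intros eps Heps. destruct (HU (eps/2) ltac:(lra)) as [d1 [Hd1 [Hd1c Hd1']]].
    destruct (HGinf (eps/2) ltac:(lra)) as [M0 [HM0 HM0']].
    exists (Rmin d1 (K / M0)). split; [apply Rmin_pos; auto; apply Rdiv_lt_0_compat; lra|].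
    pose proof (Rmin_l d1 (K / M0)); pose proof (Rmin_r d1 (K / M0)).
    split; [lra|]. intros e He'. split; [apply substitution_ex_RInt; lra|].
    specialize (Hd1' e ltac:(lra)).
    assert (HTe : M0 <= T e).
    { destruct (H e ltac:(lra)) as [_ [_ [_ [_ [_ [HT _]]]]]]. eapply Rle_trans; [|exact HT].
      apply Rmult_le_reg_r with (e / M0); [apply Rdiv_lt_0_compat; lra|].
      replace (M0 * (e / M0)) with e by (field; lra). replace (K / e * (e / M0)) with (K / M0) by (field; lra). lra. }
    specialize (HM0' (T e) HTe). unfold u in Hd1'. fold (G (T e)) in HM0'.
    apply Rabs_def2 in Hd1'. apply Rabs_def2 in HM0'. apply Rabs_def1; lra.
  -
    assert (Huc : u c = - G (T c)) by (unfold u; rewrite RInt_point_R; ring).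
    replace (U + Ginf - (Ginf - RInt g 2 (T c))) with (U - u c) by (rewrite Huc; unfold G; ring).
    apply Rnot_lt_le. intro Hlt.
    destruct (HU ((Rabs (U - u c) - eta * Lg) / 2) ltac:(lra)) as [d1 [Hd1 [Hd1c Hd1']]].
    specialize (Hd1' (d1 / 2) ltac:(lra)). pose proof (substitution_variation_bound (d1/2) ltac:(lra)) as Hbd.
    pose proof (Rabs_triang (U - u (d1/2)) (u (d1/2) - u c)) as Htri.
    replace (U - u (d1 / 2) + (u (d1 / 2) - u c)) with (U - u c) in Htri by ring.
    rewrite <- Rabs_Ropp in Hd1'. replace (- (u (d1 / 2) - U)) with (U - u (d1 / 2)) in Hd1' by ring.
    lra.
Qed.

End Substitution.

(** The integrand of chi near 0 *)

Definition rA_deriv n f sinv A rho := f rho ^ (n - 1) / f (rA n f sinv A rho) ^ (n - 1).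

Definition tau_deriv n f f1 sinv A rho :=
  (rA_deriv n f sinv A rho * f1 (rA n f sinv A rho) * f rho - f (rA n f sinv A rho) * f1 rho) / f rho ^ 2.

Lemma tau_facts kappa f f1 d0 n sinv A0 A : jacobi_pos kappa f f1 d0 -> rA_spec n f sinv d0 A0 -> 0 < A < A0 ->
  forall rho, 0 < rho < (1 + d0) / 2 ->
  0 < f rho /\ 0 < f (rA n f sinv A rho) /\
  continuity_pt (rA n f sinv A) rho /\
  continuity_pt (fun r => f (rA n f sinv A r)) rho /\
  continuity_pt (fun r => f1 (rA n f sinv A r)) rho /\
  continuity_pt (tauA n f sinv A) rho /\
  is_derive (tauA n f sinv A) rho (tau_deriv n f f1 sinv A rho) /\
  continuity_pt (tau_deriv n f f1 sinv A) rho.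
Proof.
  intros HP HR HA rho Hrho.
  pose proof (jacobi_pos_regularity _ _ _ _ HP) as [Hk [Hf [Hf1 [Hd [Hd1 Hnn]]]]]. pose proof HP as [_ [Hd0 Hpos]].
  pose proof (rA_continuous _ _ _ _ _ _ _ _ HP HR HA rho Hrho) as HRc.
  pose proof (rA_derive _ _ _ _ _ _ _ _ HP HR HA rho Hrho) as HRd.
  unfold rA_spec in HR.
  destruct (HR A HA rho ltac:(lra)) as [Hr1 [Hr2 Hr3]].
  assert (Hfr : 0 < f rho) by (apply Hpos; lra).
  assert (HfR : 0 < f (rA n f sinv A rho)) by (apply Hpos; lra).
  assert (HfRc : continuity_pt (fun r => f (rA n f sinv A r)) rho).
  { apply cont_comp; auto. apply cont_nonneg_interior; auto; lra. }
  assert (Hf1Rc : continuity_pt (fun r => f1 (rA n f sinv A r)) rho).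
  { apply cont_comp; auto. apply cont_nonneg_interior; auto; lra. }
  assert (Hfc : continuity_pt f rho) by (apply cont_nonneg_interior; auto; lra).
  assert (Hf1c : continuity_pt f1 rho) by (apply cont_nonneg_interior; auto; lra).
  split; [auto|]. split; [auto|]. split; [auto|]. split; [auto|]. split; [auto|].
  split; [|split].
  - unfold tauA. apply cont_div; auto. lra.
  - unfold tauA, tau_deriv, rA_deriv. eapply der_eq_val.
    + apply (is_derive_div (fun r => f (rA n f sinv A r)) f). 
      apply (is_derive_comp f (rA n f sinv A) rho). apply Hd; lra. exact HRd. apply Hd; lra. intro; lra.
    + simpl. unfold scal; simpl. unfold mult; simpl. reflexivity.
  - unfold tau_deriv, rA_deriv. apply cont_div; [|apply cont_pow; auto|apply pow_nonzero; lra].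
    apply cont_sub; apply cont_mul; auto. apply cont_mul; auto. apply cont_div; try apply cont_pow; auto.
    apply pow_nonzero; lra.
Qed.

(* For n = m + 2, the integrand of chi plus g(tau) tau' equals
   g(tau) tau (f'(r_A) - f'(rho)) / f(rho), with tau = f(r_A)/f(rho). *)
Lemma chi_identity (m : nat) a b p q D : 0 < a -> 0 < b -> a < b ->
  let n := S (S m) in let tau := b / a in
  q / b * / tau ^ (n - 2) * D + D / (tau ^ n - 1) * ((a ^ (n-1) / b ^ (n-1) * q * a - b * p) / a ^ 2)
  = D / (tau ^ n - 1) * tau * (q - p) / a.
Proof. intros Ha Hb Hab n tau. unfold n, tau. simpl (S (S m) - 2)%nat. simpl (S (S m) - 1)%nat.
  rewrite Nat.sub_0_r.
  assert (Hm : (b / a) ^ S (S m) - 1 <> 0).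
  { apply Rgt_not_eq. assert (1 < b / a) by (apply Rmult_lt_reg_r with a; [lra|]; unfold Rdiv; rewrite Rmult_assoc, Rinv_l; lra).
    pose proof (Rlt_pow_R1 (b/a) (S (S m)) H ltac:(lia)). lra. }
  unfold Rdiv in *. rewrite !Rpow_mult_distr, !pow_inv in *.
  assert (a ^ m <> 0) by (apply pow_nonzero; lra).
  assert (b ^ m <> 0) by (apply pow_nonzero; lra).
  assert (a ^ m <= b ^ m) by (apply pow_incr; lra). assert (0 < a ^ m) by (apply pow_lt; lra).
  assert (a * a < b * b) by nra.
  assert (a * (a * a ^ m) < b * (b * b ^ m)).
  { apply Rlt_le_trans with (b * (b * a ^ m)). rewrite <- !Rmult_assoc. apply Rmult_lt_compat_r; auto.
    rewrite <- !Rmult_assoc. apply Rmult_le_compat_l; nra. }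
  simpl pow in *. field. repeat split; try lra.
Qed.

Lemma tau_deriv_identity (m : nat) a b p q : 0 < a -> 0 < b ->
  let n := S (S m) in let tau := b / a in
  (a ^ (n-1) / b ^ (n-1) * q * a - b * p) / a ^ 2 = - (tau / a) * (p - q / tau ^ n).
Proof. intros Ha Hb n tau. unfold n, tau. simpl (S (S m) - 1)%nat.
  unfold Rdiv in *. rewrite !Rpow_mult_distr, !pow_inv in *.
  assert (a ^ m <> 0) by (apply pow_nonzero; lra).
  assert (b ^ m <> 0) by (apply pow_nonzero; lra).
  simpl pow in *. field. repeat split; try lra.
Qed.

(* tau_A(rho) - 1 is at least (r_A - rho) / (3 r_A), since f(r_A) - f(rho) >= (r_A - rho)/2
   and f(rho) <= 3 rho / 2 near 0. *)
Lemma tau_excess rho Rr a b : 0 < rho -> rho < Rr -> rho / 2 <= a <= 3 * rho / 2 ->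
  (Rr - rho) / 2 <= b - a -> (Rr - rho) / (3 * Rr) <= b / a - 1.
Proof.
  intros Hr HrR Ha Hba. replace (b / a - 1) with ((b - a) / a) by (field; lra).
  apply Rle_trans with (((Rr - rho) / 2) / a).
  - apply Rle_trans with (((Rr - rho) / 2) / (3 * rho / 2)).
    + replace (((Rr - rho) / 2) / (3 * rho / 2)) with ((Rr - rho) / (3 * rho)) by (field; lra).
      unfold Rdiv. apply Rmult_le_compat_l; [lra|]. apply Rinv_le_contravar; lra.
    + unfold Rdiv. apply Rmult_le_compat_l; [lra|]. apply Rinv_le_contravar; lra.
  - unfold Rdiv. apply Rmult_le_compat_r; [left; apply Rinv_0_lt_compat; lra|]. lra.
Qed.

Lemma one_minus_inv_pow_lower x tau k : (1 <= k)%nat -> 0 < x <= 1 -> x <= tau - 1 -> x / 2 <= 1 - / tau ^ k.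
Proof.
  intros Hk Hx Htx.
  assert (HtauN : tau <= tau ^ k) by (apply pow_ge_x; auto; lra).
  assert (Hinv : / tau ^ k <= / tau) by (apply Rinv_le_contravar; lra).
  assert (Htau1 : x / 2 <= 1 - / tau).
  { replace (1 - / tau) with ((tau - 1) / tau) by (field; lra).
    apply Rle_trans with (x / (1 + x)).
    - apply Rmult_le_compat_l; [lra|]. apply Rinv_le_contravar; lra.
    - apply Rmult_le_reg_r with ((1 + x) * tau); [nra|].
      replace (x / (1 + x) * ((1 + x) * tau)) with (x * tau) by (field; lra).
      replace ((tau - 1) / tau * ((1 + x) * tau)) with ((tau - 1) * (1 + x)) by (field; lra). nra. }
  lra.
Qed.

(* The main term p - q tau^-n of -tau' a / tau dominates the error |q - p| <= L (r_A - rho)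
   as soon as c L is small compared with eta. *)
Lemma main_term_dominates rho Rr p q c L eta t : 0 < rho < Rr -> Rr <= 2 * c -> 0 < eta ->
  24 * c * L * (eta + 1) <= eta -> Rabs (q - p) <= L * (Rr - rho) -> 1/2 <= q ->
  (Rr - rho) / (3 * Rr) / 2 <= 1 - t -> L * (Rr - rho) <= eta * (p - q * t).
Proof.
  intros Hr HRc He Hc Hqp Hq Ht. pose proof (Rle_abs (q - p)).
  set (x := (Rr - rho) / (3 * Rr)) in *.
  assert (Hx0 : 0 < x) by (unfold x; apply Rdiv_lt_0_compat; lra).
  assert (Hq1 : q * (x / 2) <= q * (1 - t)) by (apply Rmult_le_compat_l; lra).
  assert (Hc1 : (Rr - rho) / (24 * c) <= q * (x / 2)).
  { unfold x. apply Rle_trans with ((1/2) * ((Rr - rho) / (3 * Rr) / 2)).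
    - replace ((1/2) * ((Rr - rho) / (3 * Rr) / 2)) with ((Rr - rho) / (12 * Rr)) by (field; lra).
      unfold Rdiv. apply Rmult_le_compat_l; [lra|]. apply Rinv_le_contravar; lra.
    - apply Rmult_le_compat_r; [|lra]. unfold x in Hx0; lra. }
  assert (Hc2 : L * (Rr - rho) <= eta * ((Rr - rho) / (24 * c)) - eta * (L * (Rr - rho))).
  { apply Rmult_le_reg_r with (24 * c); [lra|].
    replace ((eta * ((Rr - rho) / (24 * c)) - eta * (L * (Rr - rho))) * (24 * c)) with
      (eta * (Rr - rho) - 24 * c * eta * L * (Rr - rho)) by (field; lra).
    assert (24 * c * L * (eta + 1) * (Rr - rho) <= eta * (Rr - rho)) by (apply Rmult_le_compat_r; lra).
    nra. }
  assert (eta * ((Rr - rho) / (24 * c) - L * (Rr - rho)) <= eta * (p - q * t)) by (apply Rmult_le_compat_l; lra).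
  lra.
Qed.

Lemma pointwise_estimate (m : nat) rho Rr a b p q D c L eta :
  0 < rho -> rho < Rr -> Rr <= 2 * c -> 0 < L -> 0 < eta -> 24 * c * L * (eta + 1) <= eta ->
  rho / 2 <= a <= 3 * rho / 2 -> (Rr - rho) / 2 <= b - a -> Rabs (q - p) <= L * (Rr - rho) -> 1/2 <= q ->
  let n := S (S m) in let tau := b / a in
  let TDv := (a ^ (n-1) / b ^ (n-1) * q * a - b * p) / a ^ 2 in
  1 < tau /\ TDv < 0 /\
  Rabs (D / (tau ^ n - 1) * tau * (q - p) / a) <= eta * (Rabs (D / (tau ^ n - 1)) * (- TDv)).
Proof.
  intros Hr HrR HRc HL He Hc Ha Hba Hqp Hq n tau TDv.
  pose proof (tau_excess rho Rr a b Hr HrR Ha Hba) as Hx. fold tau in Hx.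
  assert (Hx0 : 0 < (Rr - rho) / (3 * Rr)) by (apply Rdiv_lt_0_compat; lra).
  assert (Hx1 : (Rr - rho) / (3 * Rr) <= 1).
  { apply Rmult_le_reg_r with (3 * Rr); [lra|]. unfold Rdiv; rewrite Rmult_assoc, Rinv_l by lra. lra. }
  pose proof (one_minus_inv_pow_lower _ tau n ltac:(unfold n; lia) (conj Hx0 Hx1) Hx) as H1t.
  set (Dn := p - q / tau ^ n).
  assert (HDn : L * (Rr - rho) <= eta * Dn) by (apply (main_term_dominates rho Rr p q c L eta); auto; lra).
  assert (HDn0 : 0 < Dn) by (apply Rmult_lt_reg_l with eta; [lra|]; nra).
  assert (HTD : TDv = - (tau / a) * Dn) by (unfold TDv, Dn, tau, n; apply tau_deriv_identity; lra).
  assert (Hta : 0 < tau / a) by (apply Rdiv_lt_0_compat; lra).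
  split; [lra|]. split; [rewrite HTD; nra|].
  rewrite HTD. unfold Rdiv at 1. rewrite !Rabs_mult.
  rewrite (Rabs_right tau) by lra. rewrite (Rabs_right (/ a)) by (left; apply Rinv_0_lt_compat; lra).
  replace (- (- (tau / a) * Dn)) with (tau * / a * Dn) by (unfold Rdiv; ring).
  pose proof (Rabs_pos (D / (tau ^ n - 1))).
  assert (0 < tau * / a) by (apply Rmult_lt_0_compat; [lra|apply Rinv_0_lt_compat; lra]).
  assert (Rabs (q - p) <= eta * Dn) by lra.
  replace (eta * (Rabs (D / (tau ^ n - 1)) * (tau * / a * Dn))) with
    (Rabs (D / (tau ^ n - 1)) * tau * / a * (eta * Dn)) by ring.
  replace (Rabs (D / (tau ^ n - 1)) * tau * Rabs (q - p) * / a) with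
    (Rabs (D / (tau ^ n - 1)) * tau * / a * Rabs (q - p)) by ring.
  apply Rmult_le_compat_l; auto. apply Rmult_le_pos; [|left; apply Rinv_0_lt_compat; lra]. nra.
Qed.

Lemma chi_integrand_continuous kappa f f1 d0 n sinv dPhi A0 A : jacobi_pos kappa f f1 d0 -> rA_spec n f sinv d0 A0 -> 0 < A < A0 ->
  (forall v, 0 < v -> continuity_pt dPhi v) ->
  forall rho, 0 < rho < (1 + d0) / 2 -> continuity_pt (chi_integrand n f f1 sinv dPhi A) rho.
Proof.
  intros HP HR HA Hdc rho Hr.
  destruct (tau_facts _ _ _ _ _ _ _ _ HP HR HA rho Hr) as [Hfr [HfR [HRc [HfRc [Hf1Rc [HTc [HTd HTDc]]]]]]].
  assert (Htau : 0 < tauA n f sinv A rho) by (unfold tauA; apply Rdiv_lt_0_compat; auto).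
  unfold chi_integrand. apply cont_mul. apply cont_mul.
  - apply cont_div; auto. lra.
  - apply cont_inv. apply cont_pow. auto. apply pow_nonzero; lra.
  - apply (cont_comp dPhi (tauA n f sinv A)); auto.
Qed.

(* For A small, r_A(rho) <= 2c on (0, c]: sigma(r_A) = sigma(rho) + sigma(A) < sigma(2c). *)
Lemma rA_below kappa f f1 d0 n sinv A0 c : jacobi_pos kappa f f1 d0 -> rA_spec n f sinv d0 A0 ->
  0 < A0 -> 0 < c -> 2 * c <= 1 ->
  exists A1, 0 < A1 <= A0 /\ forall A, 0 < A < A1 -> forall rho, 0 < rho <= c -> rA n f sinv A rho <= 2 * c.
Proof.
  intros HP HR HA0 Hc H2c. pose proof (jacobi_pos_regularity _ _ _ _ HP) as [_ [Hf _]]. pose proof HP as [_ [Hd0 _]].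
  set (k := (n - 1)%nat).
  assert (Hgap : 0 < sigma0 f k (2 * c) - sigma0 f k c) by (pose proof (sigma0_strict _ _ _ _ k c (2 * c) HP); lra).
  destruct (sigma0_small_near_0 f k Hf _ Hgap) as [dl [Hdl Hdl']].
  exists (Rmin dl A0). split; [split; [apply Rmin_pos; lra|apply Rmin_r]|].
  intros A HA rho Hr. pose proof (Rmin_l dl A0). pose proof (Rmin_r dl A0).
  specialize (Hdl' A ltac:(lra)).
  destruct (HR A ltac:(lra) rho ltac:(lra)) as [Hr1 [Hr2 Hr3]]. fold k in Hr3.
  apply Rnot_lt_le. intro Hlt. pose proof (sigma0_strict _ _ _ _ k (2 * c) (rA n f sinv A rho) HP ltac:(lra) Hlt ltac:(lra)).
  assert (sigma0 f k rho <= sigma0 f k c).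
  { destruct (Req_dec rho c) as [->|]; [lra|]. left; apply (sigma0_strict kappa f f1 d0 k); auto; lra. }
  lra.
Qed.

Lemma chi_substitution_data kappa f f1 d0 m sinv dPhi A0 A L s1 eta c :
  let n := S (S m) in
  jacobi_pos kappa f f1 d0 -> rA_spec n f sinv d0 A0 -> 0 < A < A0 ->
  (forall v, 0 < v -> continuity_pt dPhi v) ->
  0 < L -> (forall s, 0 <= s <= d0 -> Rabs (f s) <= L /\ Rabs (f1 s) <= L /\ Rabs (kappa s * f s) <= L) ->
  0 < s1 < 1 -> (forall s, 0 <= s <= s1 -> 1/2 <= f1 s <= 3/2 /\ s / 2 <= f s <= 3 * s / 2) ->
  0 < eta -> 0 < c -> 2 * c <= s1 -> 24 * c * L * (eta + 1) <= eta ->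
  (forall rho, 0 < rho <= c -> rA n f sinv A rho <= 2 * c) ->
  substitution_data (chi_integrand n f f1 sinv dPhi A) (tauA n f sinv A) (tau_deriv n f f1 sinv A)
    (gfun n dPhi) c eta (A / 3).
Proof.
  intros n HP HR HA' Hdc HL HLb Hs1 Hs1' He Hc H2c Hcond HRle rho Hr.
  pose proof (jacobi_pos_regularity _ _ _ _ HP) as [Hk [Hf [Hf1 [Hd [Hd1 Hnn]]]]]. pose proof HP as [_ [Hd0 Hpos]].
  assert (Hrb : 0 < rho < (1 + d0) / 2) by lra.
  destruct (tau_facts _ _ _ _ _ _ _ _ HP HR HA' rho Hrb) as [Hfr [HfR [HRc [HfRc [Hf1Rc [HTc [HTd HTDc]]]]]]].
  destruct (HR A HA' rho ltac:(lra)) as [Hr1 [Hr2 Hr3]].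
  set (Rr := rA n f sinv A rho) in *.
  assert (HRr := HRle rho Hr). fold Rr in HRr.
  destruct (Hs1' rho ltac:(lra)) as [Hf1r Hfr'].
  destruct (Hs1' Rr ltac:(lra)) as [Hf1R HfR'].
  assert (Hba : (Rr - rho) / 2 <= f Rr - f rho).
  { destruct (mvt_nonneg f f1 rho Rr) as [xi [Hxi Hxi']]; try lra; auto.
    destruct (Hs1' xi ltac:(lra)) as [Hf1x _]. rewrite Hxi'. nra. }
  assert (Hqp : Rabs (f1 Rr - f1 rho) <= L * (Rr - rho)).
  { destruct (mvt_nonneg f1 (fun t => - kappa t * f t) rho Rr) as [xi [Hxi Hxi']]; try lra; auto.
    rewrite Hxi'. rewrite Rabs_mult. rewrite (Rabs_right (Rr - rho)) by lra.
    apply Rmult_le_compat_r; [lra|]. replace (- kappa xi * f xi) with (- (kappa xi * f xi)) by ring.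
    rewrite Rabs_Ropp. apply HLb; lra. }
  pose proof (pointwise_estimate m rho Rr (f rho) (f Rr) (f1 rho) (f1 Rr) (dPhi (tauA n f sinv A rho)) c L eta
      ltac:(lra) ltac:(lra) HRr HL He Hcond Hfr' Hba Hqp ltac:(lra)) as [Hgt [HTDneg Hest]].
  fold n in Hgt, HTDneg, Hest.
  assert (HTeq : tauA n f sinv A rho = f Rr / f rho) by reflexivity.
  assert (HTDeq : tau_deriv n f f1 sinv A rho = (f rho ^ (n - 1) / f Rr ^ (n - 1) * f1 Rr * f rho - f Rr * f1 rho) / f rho ^ 2)
    by reflexivity.
  rewrite <- HTeq in Hgt, Hest. rewrite <- HTDeq in HTDneg, Hest.
  split; [apply chi_integrand_continuous with kappa d0 A0; auto|]. split; auto. split; auto. split; auto. split; auto. split.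
  - rewrite HTeq. apply Rle_trans with ((A / 2) / (3 * rho / 2)).
    + right; field; lra.
    + unfold Rdiv. apply Rmult_le_compat; [lra|left; apply Rinv_0_lt_compat; lra|lra|apply Rinv_le_contravar; lra].
  - replace (chi_integrand n f f1 sinv dPhi A rho + gfun n dPhi (tauA n f sinv A rho) * tau_deriv n f f1 sinv A rho)
      with (dPhi (tauA n f sinv A rho) / (tauA n f sinv A rho ^ n - 1) * tauA n f sinv A rho * (f1 Rr - f1 rho) / f rho).
    + unfold gfun. exact Hest.
    + unfold chi_integrand, gfun. fold Rr. rewrite HTDeq, HTeq. unfold n. symmetry. apply chi_identity; lra.
Qed.

Lemma chi_near_0 kappa f f1 d0 m sinv dPhi A0 L s1 Lg Ginf eta c :
  let n := S (S m) in
  jacobi_pos kappa f f1 d0 -> rA_spec n f sinv d0 A0 -> 0 < A0 ->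
  (forall v, 0 < v -> continuity_pt dPhi v) ->
  0 < L -> (forall s, 0 <= s <= d0 -> Rabs (f s) <= L /\ Rabs (f1 s) <= L /\ Rabs (kappa s * f s) <= L) ->
  0 < s1 < 1 -> (forall s, 0 <= s <= s1 -> 1/2 <= f1 s <= 3/2 /\ s / 2 <= f s <= 3 * s / 2) ->
  (forall t, 1 < t -> continuity_pt (gfun n dPhi) t) ->
  (forall x y, 1 < x -> x <= y -> RInt (fun t => Rabs (gfun n dPhi t)) x y <= Lg) ->
  (forall eps, 0 < eps -> exists M0, 2 <= M0 /\ forall M, M0 <= M -> Rabs (RInt (gfun n dPhi) 2 M - Ginf) < eps) ->
  0 < eta -> 0 < c -> 2 * c <= s1 -> 24 * c * L * (eta + 1) <= eta ->
  exists A1, 0 < A1 <= A0 /\ forall A, 0 < A < A1 ->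
    exists L1, (forall eps, 0 < eps -> exists del, 0 < del /\ del <= c /\ forall e, 0 < e < del ->
       ex_RInt (chi_integrand n f f1 sinv dPhi A) e c /\ Rabs (RInt (chi_integrand n f f1 sinv dPhi A) e c - L1) < eps) /\
     Rabs (L1 - (Ginf - RInt (gfun n dPhi) 2 (tauA n f sinv A c))) <= eta * Lg /\
     1 < tauA n f sinv A c.
Proof.
  intros n HP HR HA0 Hdc HL HLb Hs1 Hs1' Hgc HLg HGinf He Hc H2c Hcond.
  destruct (rA_below kappa f f1 d0 n sinv A0 c HP HR HA0 Hc ltac:(lra)) as [A1 [HA1 HRle]].
  exists A1. split; auto. intros A HA.
  pose proof (chi_substitution_data kappa f f1 d0 m sinv dPhi A0 A L s1 eta c HP HR ltac:(lra) Hdc HL HLb Hs1 Hs1'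
                He Hc H2c Hcond (HRle A HA)) as Hsub.
  destruct (change_of_variable_estimate (chi_integrand n f f1 sinv dPhi A) (tauA n f sinv A) (tau_deriv n f f1 sinv A)
             (gfun n dPhi) c eta Lg Ginf (A / 3)) as [L1 [HL1a HL1b]]; auto.
  { apply Rdiv_lt_0_compat; lra. }
  exists L1; split; auto. split; auto. apply Hsub; lra.
Qed.

(** The integrand of chi away from 0 *)

(* tau_A -> 1 uniformly on [c, 1] as A -> 0: |f(r_A) - f(rho)| <= L (r_A - rho), while
   (r_A - rho) mc^(n-1) <= sigma(r_A) - sigma(rho) = sigma(A), where mc = min f on [c, delta0]. *)
Lemma tau_near_1 kappa f f1 d0 n sinv A0 L c mc :
  jacobi_pos kappa f f1 d0 -> rA_spec n f sinv d0 A0 -> 0 < A0 ->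
  0 < L -> (forall s, 0 <= s <= d0 -> Rabs (f s) <= L /\ Rabs (f1 s) <= L /\ Rabs (kappa s * f s) <= L) ->
  0 < c < 1 -> 0 < mc -> (forall s, c <= s <= d0 -> mc <= f s) ->
  forall dt, 0 < dt -> exists A2, 0 < A2 <= A0 /\ forall A, 0 < A < A2 -> forall rho, c <= rho <= 1 ->
    Rabs (tauA n f sinv A rho - 1) <= dt.
Proof.
  intros HP HR HA0 HL HLb Hc Hmc Hmc' dt Hdt.
  pose proof (jacobi_pos_regularity _ _ _ _ HP) as [Hk [Hf [Hf1 [Hd [Hdd1 Hnn]]]]]. pose proof HP as [_ [Hd0 Hpos]].
  set (k := (n - 1)%nat).
  assert (Hmk : 0 < mc ^ k) by (apply pow_lt; lra).
  set (tgt := dt * mc * mc ^ k / L).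
  assert (Htgt : 0 < tgt) by (unfold tgt; apply Rdiv_lt_0_compat; [repeat apply Rmult_lt_0_compat|]; lra).
  destruct (sigma0_small_near_0 f k Hf tgt Htgt) as [dl [Hdl Hdl']].
  exists (Rmin dl A0). split; [split; [apply Rmin_pos; lra|apply Rmin_r]|].
  intros A HA rho Hr. pose proof (Rmin_l dl A0). pose proof (Rmin_r dl A0).
  specialize (Hdl' A ltac:(lra)).
  destruct (HR A ltac:(lra) rho ltac:(lra)) as [Hr1 [Hr2 Hr3]]. fold k in Hr3.
  set (Rr := rA n f sinv A rho) in *.
  assert (HRl : (Rr - rho) * mc ^ k <= sigma0 f k A).
  { replace (sigma0 f k A) with (sigma0 f k Rr - sigma0 f k rho) by lra.
    apply sigma0_lower_bound; auto; try lra. intros s Hs. unfold ext0; rewrite Rmax_right by lra. apply Hmc'; lra. }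
  destruct (mvt_nonneg f f1 rho Rr) as [xi [Hxi Hxi']]; try lra; auto.
  assert (Hfr : mc <= f rho) by (apply Hmc'; lra).
  unfold tauA. fold Rr. replace (f Rr / f rho - 1) with ((f Rr - f rho) / f rho) by (field; lra).
  rewrite Hxi'. unfold Rdiv. rewrite !Rabs_mult. rewrite (Rabs_right (Rr - rho)) by lra.
  rewrite (Rabs_right (/ f rho)) by (left; apply Rinv_0_lt_compat; lra).
  destruct (HLb xi ltac:(lra)) as [_ [Hf1x _]].
  apply Rle_trans with (L * (Rr - rho) * / mc).
  - apply Rmult_le_compat; try lra. apply Rmult_le_pos; [apply Rabs_pos|lra]. left; apply Rinv_0_lt_compat; lra.
    apply Rmult_le_compat_r; lra. apply Rinv_le_contravar; lra.
  - apply Rmult_le_reg_r with (mc * mc ^ k / L). apply Rdiv_lt_0_compat; [apply Rmult_lt_0_compat|]; lra.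
    replace (L * (Rr - rho) * / mc * (mc * mc ^ k / L)) with ((Rr - rho) * mc ^ k) by (field; lra).
    replace (dt * (mc * mc ^ k / L)) with tgt by (unfold tgt; field; lra). lra.
Qed.

Lemma chi_integrand_bound kappa f f1 d0 n sinv dPhi A0 A L c mc rho :
  jacobi_pos kappa f f1 d0 -> rA_spec n f sinv d0 A0 -> 0 < A < A0 ->
  (forall s, 0 <= s <= d0 -> Rabs (f s) <= L /\ Rabs (f1 s) <= L /\ Rabs (kappa s * f s) <= L) ->
  0 < c < 1 -> (forall s, c <= s <= d0 -> mc <= f s) -> 0 < mc ->
  c <= rho <= 1 -> 1/2 <= tauA n f sinv A rho ->
  Rabs (chi_integrand n f f1 sinv dPhi A rho) <= Rabs (dPhi (tauA n f sinv A rho)) * (L / mc * 2 ^ (n - 2)).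
Proof.
  intros HP HR HA HLb Hc Hmc' Hmc Hr HT. pose proof HP as [_ [Hd0 _]].
  destruct (HR A HA rho ltac:(lra)) as [Hr1 [Hr2 Hr3]].
  set (Rr := rA n f sinv A rho) in *. set (T := tauA n f sinv A rho) in *.
  assert (HfR : mc <= f Rr) by (apply Hmc'; lra).
  unfold chi_integrand. fold Rr T. rewrite !Rabs_mult.
  assert (Hp1 : Rabs (f1 Rr / f Rr) <= L / mc).
  { unfold Rdiv. rewrite Rabs_mult. rewrite (Rabs_right (/ f Rr)) by (left; apply Rinv_0_lt_compat; lra).
    apply Rmult_le_compat; try apply Rabs_pos. left; apply Rinv_0_lt_compat; lra. apply HLb; lra.
    apply Rinv_le_contravar; lra. }
  assert (Hp2 : Rabs (/ T ^ (n - 2)) <= 2 ^ (n - 2)).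
  { rewrite Rabs_right by (left; apply Rinv_0_lt_compat, pow_lt; lra).
    rewrite <- (Rinv_inv (2 ^ (n - 2))). apply Rinv_le_contravar. apply Rinv_0_lt_compat, pow_lt; lra.
    rewrite <- pow_inv. apply pow_incr. split; [left; apply Rinv_0_lt_compat; lra|]. lra. }
  rewrite (Rmult_comm (Rabs (dPhi T))).
  apply Rmult_le_compat_r; [apply Rabs_pos|]. apply Rmult_le_compat; try apply Rabs_pos; auto.
Qed.

(* Away from 0: for A small, int_c^1 chi_integrand and tau_A - 1 on [c, 1] are small, since
   Phihat' is continuous with Phihat'(1) = 0. *)
Lemma chi_away_from_0 kappa f f1 d0 n sinv dPhi A0 L c :
  (2 <= n)%nat ->
  jacobi_pos kappa f f1 d0 -> rA_spec n f sinv d0 A0 -> 0 < A0 ->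
  (forall v, 0 < v -> continuity_pt dPhi v) -> dPhi 1 = 0 ->
  0 < L -> (forall s, 0 <= s <= d0 -> Rabs (f s) <= L /\ Rabs (f1 s) <= L /\ Rabs (kappa s * f s) <= L) ->
  0 < c < 1 ->
  forall eps, 0 < eps -> exists A2, 0 < A2 <= A0 /\ forall A, 0 < A < A2 ->
    ex_RInt (chi_integrand n f f1 sinv dPhi A) c 1 /\ Rabs (RInt (chi_integrand n f f1 sinv dPhi A) c 1) <= eps /\
    Rabs (tauA n f sinv A c - 1) <= eps /\ Rabs (tauA n f sinv A 1 - 1) <= eps.
Proof.
  intros Hn HP HR HA0 Hdc Hd1 HL HLb Hc eps Heps. pose proof HP as [_ [Hd0 _]].
  destruct (jacobi_pos_min _ _ _ _ c d0 HP ltac:(lra) ltac:(lra) ltac:(lra)) as [mc [Hmc Hmc']].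
  set (Kh := L / mc * 2 ^ (n - 2)).
  assert (HKh : 0 < Kh) by (unfold Kh; apply Rmult_lt_0_compat; [apply Rdiv_lt_0_compat; lra|apply pow_lt; lra]).
  destruct (Hdc 1 Rlt_0_1 (eps / (Kh + 1)) ltac:(apply Rdiv_lt_0_compat; lra)) as [dp [Hdp Hdp']].
  set (dt := Rmin (Rmin eps (1/2)) (dp / 2)).
  assert (Hdt : 0 < dt) by (unfold dt; repeat apply Rmin_pos; lra).
  assert (Hdt1 : dt <= eps /\ dt <= 1/2 /\ dt < dp).
  { unfold dt. pose proof (Rmin_l (Rmin eps (1/2)) (dp/2)). pose proof (Rmin_r (Rmin eps (1/2)) (dp/2)).
    pose proof (Rmin_l eps (1/2)). pose proof (Rmin_r eps (1/2)). lra. }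
  destruct (tau_near_1 kappa f f1 d0 n sinv A0 L c mc HP HR HA0 HL HLb Hc Hmc Hmc' dt Hdt) as [A2 [HA2 Htau]].
  exists A2. split; auto. intros A HA.
  assert (Hhb : forall rho, c <= rho <= 1 -> Rabs (chi_integrand n f f1 sinv dPhi A rho) <= eps / (Kh + 1) * Kh).
  { intros rho Hr. specialize (Htau A HA rho Hr). set (T := tauA n f sinv A rho) in *.
    assert (HT : 1/2 <= T) by (pose proof (Rle_abs (- (T - 1))) as HH; rewrite Rabs_Ropp in HH; lra).
    assert (HdT : Rabs (dPhi T) <= eps / (Kh + 1)).
    { destruct (Req_dec T 1) as [->|Hne]; [rewrite Hd1, Rabs_R0; left; apply Rdiv_lt_0_compat; lra|].
      specialize (Hdp' T). simpl in Hdp'. unfold R_dist in Hdp'. rewrite Hd1, Rminus_0_r in Hdp'.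
      left; apply Hdp'. split; [split; [exact I|auto]|lra]. }
    eapply Rle_trans; [apply (chi_integrand_bound kappa f f1 d0 n sinv dPhi A0 A L c mc rho); auto; lra|].
    apply Rmult_le_compat_r; [lra|auto]. }
  assert (Hcont : forall rho, c <= rho <= 1 -> continuity_pt (chi_integrand n f f1 sinv dPhi A) rho).
  { intros rho Hr. apply chi_integrand_continuous with kappa d0 A0; auto; lra. }
  split; [apply ex_RInt_segment; [lra|auto]|]. split.
  - eapply Rle_trans; [apply (RInt_abs_bound _ c 1 (eps / (Kh + 1) * Kh)); auto; lra|].
    assert (eps / (Kh + 1) * Kh <= eps).
    { apply Rmult_le_reg_r with (Kh + 1); [lra|]. replace (eps / (Kh + 1) * Kh * (Kh + 1)) with (eps * Kh) by (field; lra). nra. }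
    assert (0 <= eps / (Kh + 1) * Kh) by (apply Rmult_le_pos; [left; apply Rdiv_lt_0_compat|]; lra).
    nra.
  - split; [eapply Rle_trans; [apply (Htau A HA)|]; lra|eapply Rle_trans; [apply (Htau A HA)|]; lra].
Qed.

Lemma improper_left_split (h : R -> R) c L1 : 0 < c < 1 ->
  (forall eps, 0 < eps -> exists del, 0 < del /\ del <= c /\ forall e, 0 < e < del ->
       ex_RInt h e c /\ Rabs (RInt h e c - L1) < eps) ->
  ex_RInt h c 1 -> improper_left h 0 1 (L1 + RInt h c 1).
Proof.
  intros Hc H Hex eps Heps. destruct (H eps Heps) as [del [Hdel [Hdc H']]].
  exists del; split; auto. intros e He. rewrite Rplus_0_l in He. destruct (H' e ltac:(lra)) as [Hex1 Hb].
  assert (Hex2 : ex_RInt h e 1) by (apply (ex_RInt_Chasles h e c 1); auto).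
  destruct (Defs_RInt_correct h e 1 Hex2) as [Hi ->]. split; auto.
  rewrite <- (RInt_Chasles_R h e c 1) by auto.
  replace (RInt h e c + RInt h c 1 - (L1 + RInt h c 1)) with (RInt h e c - L1) by ring. auto.
Qed.

Lemma pow_continuous_at_1 (k : nat) eps : 0 < eps -> exists d, 0 < d /\ forall t, Rabs (t - 1) < d -> Rabs (t ^ k - 1) < eps.
Proof.
  intros He. destruct (cont_pow (fun t => t) 1 k (cont_id 1) eps He) as [d [Hd Hd']]. exists d; split; auto.
  intros t Ht. destruct (Req_dec t 1) as [->|Hne]. rewrite pow1, Rminus_diag, Rabs_R0; auto.
  specialize (Hd' t). simpl in Hd'. unfold R_dist in Hd'. rewrite pow1 in Hd'. apply Hd'.
  split; [split; [exact I|auto]|auto].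
Qed.

Lemma scaled_limit_estimate Tk I P e : 0 < e <= 1 -> Rabs (I - P) < 3 * e / 4 ->
  Rabs (Tk - 1) < e / (4 * (Rabs P + 1)) -> Rabs (Tk * I - P) < e.
Proof.
  intros He HIP HT. pose proof (Rabs_pos P) as HP0.
  assert (HIabs : Rabs I <= Rabs P + 1).
  { replace I with ((I - P) + P) by ring. eapply Rle_trans; [apply Rabs_triang|]. lra. }
  replace (Tk * I - P) with ((Tk - 1) * I + (I - P)) by ring.
  eapply Rle_lt_trans; [apply Rabs_triang|]. rewrite Rabs_mult.
  assert (Rabs (Tk - 1) * Rabs I <= e / (4 * (Rabs P + 1)) * (Rabs P + 1))
    by (apply Rmult_le_compat; try apply Rabs_pos; lra).
  replace (e / (4 * (Rabs P + 1)) * (Rabs P + 1)) with (e / 4) in H by (field; lra).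
  lra.
Qed.

(* The value of chi(A) / tau_A(1)^(n-1): the improper integral, when it exists. *)
Definition chi_value (n : nat) (f f1 sinv dPhi : R -> R) (A : R) : R :=
  epsilon (inhabits 0) (fun L => improper_left (chi_integrand n f f1 sinv dPhi A) 0 1 L).

Lemma chi_value_spec n f f1 sinv dPhi A L :
  improper_left (chi_integrand n f f1 sinv dPhi A) 0 1 L -> chi_value n f f1 sinv dPhi A = L.
Proof.
  intros HL. assert (Hex : exists L, improper_left (chi_integrand n f f1 sinv dPhi A) 0 1 L) by (exists L; auto).
  eapply improper_left_unique; [|exact HL]. exact (epsilon_spec (inhabits 0) _ Hex).
Qed.

Section ChiLimit.

Variables (kappa f f1 sinv dPhi : R -> R) (d0 A0 L s1 Lg G1 Ginf : R) (m : nat).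
Let n := S (S m).
Hypothesis HP : jacobi_pos kappa f f1 d0.
Hypothesis HR : rA_spec n f sinv d0 A0.
Hypothesis HA0 : 0 < A0.
Hypothesis Hdc : forall v, 0 < v -> continuity_pt dPhi v.
Hypothesis Hd1 : dPhi 1 = 0.
Hypothesis HL : 0 < L.
Hypothesis HLb : forall s, 0 <= s <= d0 -> Rabs (f s) <= L /\ Rabs (f1 s) <= L /\ Rabs (kappa s * f s) <= L.
Hypothesis Hs1 : 0 < s1 < 1.
Hypothesis Hs1' : forall s, 0 <= s <= s1 -> 1/2 <= f1 s <= 3/2 /\ s / 2 <= f s <= 3 * s / 2.
Hypothesis HLg0 : 0 < Lg.
Hypothesis HLg : forall x y, 1 < x -> x <= y -> RInt (fun t => Rabs (gfun n dPhi t)) x y <= Lg.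
Hypothesis HG1 : forall eps, 0 < eps -> exists eta, 0 < eta /\ eta <= 1 /\ forall d, 1 < d < 1 + eta ->
  Rabs (RInt (gfun n dPhi) 2 d - G1) < eps.
Hypothesis HGinf : forall eps, 0 < eps -> exists M0, 2 <= M0 /\ forall M, M0 <= M ->
  Rabs (RInt (gfun n dPhi) 2 M - Ginf) < eps.

Let h A := chi_integrand n f f1 sinv dPhi A.

Lemma cutoff_exists eta : 0 < eta -> exists c, 0 < c < 1 /\ 2 * c <= s1 /\ 24 * c * L * (eta + 1) <= eta.
Proof.
  intros He. set (c := Rmin (s1 / 2) (eta / (24 * L * (eta + 1)))).
  pose proof (Rmin_l (s1/2) (eta / (24 * L * (eta + 1)))). pose proof (Rmin_r (s1/2) (eta / (24 * L * (eta + 1)))).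
  assert (Hden : 0 < 24 * L * (eta + 1)) by (apply Rmult_lt_0_compat; lra).
  exists c. split; [split; [apply Rmin_pos; [lra|apply Rdiv_lt_0_compat; lra]|unfold c; lra]|]. split; [unfold c; lra|].
  replace (24 * c * L * (eta + 1)) with (c * (24 * L * (eta + 1))) by ring.
  apply Rle_trans with (eta / (24 * L * (eta + 1)) * (24 * L * (eta + 1))).
  - apply Rmult_le_compat_r; unfold c; lra.
  - right; field; lra.
Qed.

Lemma chi_split eta c : 0 < eta -> 0 < c < 1 -> 2 * c <= s1 -> 24 * c * L * (eta + 1) <= eta ->
  exists A1, 0 < A1 <= A0 /\ forall A, 0 < A < A1 -> exists L1,
    chi_value n f f1 sinv dPhi A = L1 + RInt (h A) c 1 /\
    improper_left (h A) 0 1 (L1 + RInt (h A) c 1) /\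
    Rabs (L1 - (Ginf - RInt (gfun n dPhi) 2 (tauA n f sinv A c))) <= eta * Lg /\
    1 < tauA n f sinv A c.
Proof.
  intros He Hc H2c Hcond.
  destruct (chi_near_0 kappa f f1 d0 m sinv dPhi A0 L s1 Lg Ginf eta c HP HR HA0 Hdc HL HLb Hs1 Hs1'
     (gfun_continuous n dPhi ltac:(unfold n; lia) Hdc) HLg HGinf He ltac:(lra) H2c Hcond) as [A1 [HA1 HA1']].
  exists A1. split; auto. intros A HA. destruct (HA1' A HA) as [L1 [Himp [Hest Htau]]].
  assert (Hex : ex_RInt (h A) c 1).
  { pose proof HP as [_ [Hd0 _]]. apply ex_RInt_segment; [lra|]. intros x Hx.
    apply chi_integrand_continuous with kappa d0 A0; auto; lra. }
  pose proof (improper_left_split (h A) c L1 Hc Himp Hex) as Hsplit.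
  exists L1. split; [apply chi_value_spec; exact Hsplit|]. auto.
Qed.

Lemma chi_exists : exists a0, 0 < a0 /\ forall A, 0 < A < a0 -> improper_left (h A) 0 1 (chi_value n f f1 sinv dPhi A).
Proof.
  destruct (cutoff_exists 1 Rlt_0_1) as [c [Hc [H2c Hcond]]].
  destruct (chi_split 1 c Rlt_0_1 Hc H2c Hcond) as [A1 [HA1 HA1']].
  exists A1. split; [lra|]. intros A HA. destruct (HA1' A HA) as [L1 [-> [Himp _]]]. exact Himp.
Qed.

(* Given eps: choose eta with eta Lg <= eps/4 and a cutoff c; then for A small, the part of
   chi on [0, c] is within eps/4 + eps/4 of Ginf - G1 (since tau_A(c) is close to 1), the part
   on [c, 1] is at most eps/4, and tau_A(1)^(n-1) is close to 1. *)
Lemma chi_converges : forall eps, 0 < eps -> exists eta, 0 < eta /\ forall A, 0 < A < eta ->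
  Rabs ((tauA n f sinv A 1) ^ (n - 1) * chi_value n f f1 sinv dPhi A - (Ginf - G1)) < eps.
Proof.
  intros eps Heps.
  set (e' := Rmin eps 1).
  assert (He' : 0 < e' <= 1 /\ e' <= eps) by (unfold e'; split; [split; [apply Rmin_pos; lra|apply Rmin_r]|apply Rmin_l]).
  set (eta := e' / (4 * (Lg + 1))).
  assert (Heta : 0 < eta) by (unfold eta; apply Rdiv_lt_0_compat; lra).
  assert (HetaLg : eta * Lg <= e' / 4).
  { unfold eta. apply Rmult_le_reg_r with (4 * (Lg + 1)); [lra|].
    replace (e' / (4 * (Lg + 1)) * Lg * (4 * (Lg + 1))) with (e' * Lg) by (field; lra).
    replace (e' / 4 * (4 * (Lg + 1))) with (e' * (Lg + 1)) by field. nra. }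
  destruct (cutoff_exists eta Heta) as [c [Hc [H2c Hcond]]].
  destruct (chi_split eta c Heta Hc H2c Hcond) as [A3 [HA3 HA3']].
  destruct (HG1 (e'/4) ltac:(lra)) as [etaG [HetaG [HetaG1 HetaG']]].
  set (P := Ginf - G1).
  destruct (pow_continuous_at_1 (n - 1) (e' / (4 * (Rabs P + 1)))) as [dp [Hdp Hdp']].
  { apply Rdiv_lt_0_compat; [lra|pose proof (Rabs_pos P); lra]. }
  set (e2 := Rmin (e'/4) (Rmin (etaG/2) (dp/2))).
  assert (He2 : 0 < e2 /\ e2 <= e'/4 /\ e2 <= etaG/2 /\ e2 <= dp/2).
  { unfold e2. pose proof (Rmin_l (e'/4) (Rmin (etaG/2) (dp/2))). pose proof (Rmin_r (e'/4) (Rmin (etaG/2) (dp/2))).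
    pose proof (Rmin_l (etaG/2) (dp/2)). pose proof (Rmin_r (etaG/2) (dp/2)).
    split; [repeat apply Rmin_pos; lra|lra]. }
  destruct (chi_away_from_0 kappa f f1 d0 n sinv dPhi A0 L c ltac:(unfold n; lia) HP HR HA0 Hdc Hd1 HL HLb
     Hc e2 ltac:(lra)) as [A2 [HA2 HA2']].
  exists (Rmin A2 A3). split; [apply Rmin_pos; lra|].
  intros A HA. pose proof (Rmin_l A2 A3). pose proof (Rmin_r A2 A3).
  destruct (HA3' A ltac:(lra)) as [L1 [HI [_ [HL1 _]]]].
  destruct (HA2' A ltac:(lra)) as [_ [HJ2 [Htc Ht1]]].
  rewrite HI. fold (h A) in HJ2.
  assert (HGc : Rabs (RInt (gfun n dPhi) 2 (tauA n f sinv A c) - G1) < e' / 4).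
  { apply HetaG'. pose proof (Rle_abs (tauA n f sinv A c - 1)). destruct (HA3' A ltac:(lra)) as [_ [_ [_ [_ Htc1]]]]. lra. }
  assert (HIP : Rabs (L1 + RInt (h A) c 1 - P) < 3 * e' / 4).
  { unfold P. replace (L1 + RInt (h A) c 1 - (Ginf - G1)) with
      ((L1 - (Ginf - RInt (gfun n dPhi) 2 (tauA n f sinv A c))) - (RInt (gfun n dPhi) 2 (tauA n f sinv A c) - G1)
       + RInt (h A) c 1) by ring.
    eapply Rle_lt_trans; [apply Rabs_triang|].
    eapply Rle_lt_trans; [apply Rplus_le_compat_r; apply Rabs_triang|]. rewrite Rabs_Ropp. lra. }
  assert (HT1 : Rabs (tauA n f sinv A 1 ^ (n - 1) - 1) < e' / (4 * (Rabs P + 1))) by (apply Hdp'; lra).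
  apply Rlt_le_trans with e'; [apply scaled_limit_estimate; auto; lra|lra].
Qed.

End ChiLimit.

Theorem lemma3p3
  (n : nat) (kappa f f1 : R -> R) (Phi : (nat -> R) -> R)
  (dPhi sinv : R -> R) :
  (2 <= n)%nat ->
  continuous_nonneg kappa ->
  (exists delta0, 1 < delta0 /\
     exists pr : Riemann_integrable (fun s => s * Rmax (kappa s) 0) 0 delta0,
       RiemannInt pr <= 1) ->
  deriv_nonneg f f1 ->
  deriv_nonneg f1 (fun t => - kappa t * f t) ->
  f 0 = 0 -> f1 0 = 1 ->
  depends_on_first n Phi ->
  symmetric_on_pos n Phi ->
  C1_on_pos n Phi ->
  (forall v, 0 < v -> derivable_pt_lim (Phihat n Phi) v (dPhi v)) ->
  (exists l, derivable_pt_lim dPhi 1 l) ->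
  (forall delta, 1 < delta -> exists B, forall M, delta <= M ->
     inhabited (Riemann_integrable (fun v => Rabs (dPhi v / (v ^ n - 1))) delta M) /\
     Defs.RInt (fun v => Rabs (dPhi v / (v ^ n - 1))) delta M <= B) ->
  (forall t, 0 <= t -> (forall s, 0 < s <= t -> 0 < f s) ->
     sinv (sigmaf n f t) = t) ->
  exists Pcr,
    improper_1_inf (fun tau => dPhi tau / (tau ^ n - 1)) Pcr /\
    exists a0, 0 < a0 /\
    exists I : R -> R,
      (forall A, 0 < A < a0 ->
         improper_left (chi_integrand n f f1 sinv dPhi A) 0 1 (I A)) /\
      (forall eps, 0 < eps -> exists eta, 0 < eta /\
         forall A, 0 < A < eta ->
           Rabs ((tauA n f sinv A 1) ^ (n - 1) * I A - Pcr) < eps).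
Proof.
  intros Hn Hk [d0 [Hd0 [pr Hpr]]] Hf Hf1 F0 F10 Hdep Hsym [D HC] HdP Hl HL1 Hsinv.
  destruct n as [|[|m]]; [lia|lia|].
  assert (HF : jacobi kappa f f1) by (repeat split; auto).
  assert (HP : jacobi_pos kappa f f1 d0) by (repeat split; auto; apply (jacobi_positive kappa f f1 d0 pr); auto).
  pose proof (dPhi_continuous _ Phi D dPhi Hdep HC HdP) as Hdc.
  pose proof (dPhi_at_1 _ Phi D dPhi Hn Hdep Hsym HC HdP) as Hd1.
  destruct (gfun_bounded_near_1 (S (S m)) dPhi ltac:(lia) Hdc Hd1 Hl) as [Cg [HCg Hbnd]].
  destruct (gfun_abs_integral_bounded (S (S m)) dPhi ltac:(lia) Hdc Cg HCg Hbnd HL1) as [Lg [HLg0 HLg]].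
  destruct (gfun_limit_at_1 (S (S m)) dPhi ltac:(lia) Hdc Cg HCg Hbnd) as [G1 HG1].
  destruct (gfun_limit_at_infinity (S (S m)) dPhi ltac:(lia) Hdc Lg HLg) as [Ginf HGinf].
  exists (Ginf - G1). split; [apply critical_integral; auto; lia|].
  destruct (rA_exists kappa f f1 d0 _ sinv HP Hsinv) as [A0 [HA0 HR]].
  destruct (jacobi_bounds _ _ _ _ HP) as [L [HL HLb]].
  destruct (jacobi_near_0 _ _ _ HF) as [s1 [Hs1 Hs1']].
  destruct (chi_exists kappa f f1 sinv dPhi d0 A0 L s1 Lg Ginf m HP HR ltac:(lra) Hdc HL HLb Hs1 Hs1' HLg HGinf)
    as [a0 [Ha0 Himp]].
  exists a0. split; auto. exists (chi_value (S (S m)) f f1 sinv dPhi). split; [exact Himp|].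
  exact (chi_converges kappa f f1 sinv dPhi d0 A0 L s1 Lg G1 Ginf m HP HR ltac:(lra) Hdc Hd1 HL HLb Hs1 Hs1' HLg0 HLg HG1 HGinf).
Qed.
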